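(* Consider problem (P) and suppose Assumptions A and B hold. Then: (i) Algorithm SCP$_{ls}$ is well defined: every subproblem (S) arising in the algorithm has a unique solution, and there is $k_0\in\mathbb N_+$, independent of $t$, such that at every outer iteration $t\ge 0$ the inner loop (step (3)) terminates after at most $k_0$ inner iterations, producing $x^{t+1}$ with $g(x^{t+1})\le 0$. (ii) The sequence $\{(L_f^t,L_g^t)\}$ generated by SCP$_{ls}$ is bounded. (iii) For every $t\ge 0$, every trial pair $(\tilde L_f,\tilde L_g)$ used in the inner loop at iteration $t$ and every $i\in\{1,\dots,m\}$, the number $\tilde R_i:=\big\|\nabla g_i(x^t)/(\tilde L_g)_i\big\|^2-\frac{2}{(\tilde L_g)_i}g_i(x^t)$ is strictly positive. (iv) For every $t\ge0$ and every trial pair $(\tilde L_f,\tilde L_g)$ at iteration $t$, with $\tilde x$ the solution of (S), the subproblem (S) has a Lagrange multiplier $\tilde\lambda\in\mathbb R^m_+$; setting $\tilde L_{fg}:=\tilde L_f+\langle\tilde\lambda,\tilde L_g\rangle$, one has $\tilde\lambda_i\big(g_i(x^t)+\langle\nabla g_i(x^t),\tilde x-x^t\rangle+\frac{(\tilde L_g)_i}{2}\|\tilde x-x^t\|^2\big)=0$ for all $i$, and $0\in\nabla f(x^t)-\xi^t+\tilde L_{fg}(\tilde x-x^t)+\partial P_1(\tilde x)+\sum_{i=1}^m\tilde\lambda_i\nabla g_i(x^t)$. Moreover, if $g(\tilde x)\le 0$, then for every $x\in\mathbb R^n$, $F(\tilde x)\le f(x^t)+\langle\nabla f(x^t)-\xi^t,x-x^t\rangle+\frac{\tilde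 L_{fg}}{2}\|x-x^t\|^2+P_1(x)-P_2(x^t)+\sum_{i=1}^m\tilde\lambda_i\big(g_i(x^t)+\langle\nabla g_i(x^t),x-x^t\rangle\big)-\frac{\tilde L_{fg}}{2}\|x-\tilde x\|^2-\frac{\tilde L_f-L_f}{2}\|\tilde x-x^t\|^2$, where $L_f$ is the Lipschitz modulus of $\nabla f$ from Assumption A(i).
   Context: Problem (P): $\min_{x\in\mathbb R^n}F(x):=f(x)+P_1(x)-P_2(x)+\delta_{\{g\le 0\}}(x)$, where $f:\mathbb R^n\to\mathbb R$ is continuously differentiable, $P_1,P_2:\mathbb R^n\to\mathbb R$ are convex and continuous (possibly nonsmooth), $g=(g_1,\dots,g_m):\mathbb R^n\to\mathbb R^m$ is continuous with $\{x:g(x)\le0\}\neq\emptyset$ (inequalities between vectors are componentwise), and $\delta_C$ denotes the indicator function of $C$ (equal to $0$ on $C$ and $+\infty$ outside). $\partial$ denotes the (limiting) subdifferential; for convex functions it is the usual convex subdifferential. Assumption A: (i) $\nabla f$ is Lipschitz with modulus $L_f$; (ii) each $g_i$ is differentiable with $\nabla g_i$ Lipschitz with modulus $L_{g_i}$; (iii) $F$ is level-bounded. Assumption B (MFCQ): each $g_i$ is continuously differentiable and for every $x$ with $g(x)\le0$ there exists $d\in\mathbb R^n$ with $\langle\nabla g_i(x),d\rangle<0$ for all $i\in I(x):=\{j:g_j(x)=0\}$. For $x,y\in\mathbb R^n$, $w\in\mathbb R^m$, let $\bar G(x,y,w)\in\mathbb R^m$ have components $\bar G_i(x,y,w)=g_i(y)+\langle\nabla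 g_i(y),x-y\rangle+\frac{w_i}{2}\|x-y\|^2$. Algorithm SCP$_{ls}$: fix $c>0$, $0<\underline L<\bar L$, $\tau>1$ and $x^0$ with $g(x^0)\le0$. For $t=0,1,2,\dots$: (1) pick any $\xi^t\in\partial P_2(x^t)$; (2) choose $L_f^{t,0}\in[\underline L,\bar L]$ and $L_g^{t,0}\in[\underline L,\bar L]^m$ arbitrarily and set $\tilde L_f=L_f^{t,0}$, $\tilde L_g=L_g^{t,0}$; (3) compute $\tilde x$ solving the subproblem (S): minimize $\langle\nabla f(x^t)-\xi^t,x-x^t\rangle+\frac{\tilde L_f}{2}\|x-x^t\|^2+P_1(x)$ subject to $\bar G(x,x^t,\tilde L_g)\le0$. If $g(\tilde x)\le0$ and $F(\tilde x)\le F(x^t)-\frac c2\|\tilde x-x^t\|^2$, set $x^{t+1}=\tilde x$, $L_f^t=\tilde L_f$, $L_g^t=\tilde L_g$ and go to iteration $t+1$. Otherwise, if $g(\tilde x)\not\le0$ replace $\tilde L_g$ by $\tau\tilde L_g$, while if $g(\tilde x)\le0$ but the decrease inequality fails replace $\tilde L_f$ by $\tau\tilde L_f$; then repeat step (3) (these repetitions are the inner loop). The algorithm produces infinite sequences $\{x^t\},\{\xi^t\},\{L_f^t\},\{L_g^t\}$. A Lagrange multiplier of (S) is a vector $\lambda\in\mathbb R^m_+$ such that $\tilde x$ minimizes $x\mapsto\langle\nabla f(x^t)-\xi^t,x-x^t\rangle+\frac{\tilde L_f}{2}\|x-x^t\|^2+P_1(x)+\langle\lambda,\bar G(x,x^t,\tilde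 L_g)\rangle$ over $\mathbb R^n$ and $\lambda_i\bar G_i(\tilde x,x^t,\tilde L_g)=0$ for all $i$. *)

From Stdlib Require Import Reals.
From mathcomp Require Import ssreflect ssrfun ssrbool eqtype ssrnat fintype bigop.
Set Implicit Arguments. Unset Strict Implicit.
Open Scope R_scope.

Definition vec (n : nat) := 'I_n -> R.

Definition vadd {n} (x y : vec n) : vec n := fun i => x i + y i.
Definition vsub {n} (x y : vec n) : vec n := fun i => x i - y i.
Definition vscale {n} (a : R) (x : vec n) : vec n := fun i => a * x i.
Definition dot {n} (x y : vec n) : R := \big[Rplus/0]_(i < n) (x i * y i).
Definition norm {n} (x : vec n) : R := sqrt (dot x x).

Definition is_gradient {n} (f : vec n -> R) (gf : vec n -> vec n) : Prop :=
  forall x eps, 0 < eps -> exists delta, 0 < delta /\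
    forall h, norm h < delta ->
      Rabs (f (vadd x h) - f x - dot (gf x) h) <= eps * norm h.

Definition rcontinuous {n} (f : vec n -> R) : Prop :=
  forall x eps, 0 < eps -> exists delta, 0 < delta /\
    forall y, norm (vsub y x) < delta -> Rabs (f y - f x) < eps.

Definition vcontinuous {n k} (F : vec n -> vec k) : Prop :=
  forall x eps, 0 < eps -> exists delta, 0 < delta /\
    forall y, norm (vsub y x) < delta -> norm (vsub (F y) (F x)) < eps.

Definition lipschitz {n k} (F : vec n -> vec k) (L : R) : Prop :=
  forall x y, norm (vsub (F x) (F y)) <= L * norm (vsub x y).

Definition convex {n} (P : vec n -> R) : Prop :=
  forall x y a, 0 <= a <= 1 ->
    P (vadd (vscale a x) (vscale (1 - a) y)) <= a * P x + (1 - a) * P y.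

Definition subgrad {n} (P : vec n -> R) (x v : vec n) : Prop :=
  forall y, P x + dot v (vsub y x) <= P y.

Definition feasible {n m} (g : 'I_m -> vec n -> R) (x : vec n) : Prop :=
  forall i, g i x <= 0.

(* Finite part of F; F(x) = Fval x if g(x) <= 0, and +infinity otherwise. *)
Definition Fval {n} (f P1 P2 : vec n -> R) (x : vec n) : R := f x + P1 x - P2 x.

Definition level_bounded {n m} (f P1 P2 : vec n -> R) (g : 'I_m -> vec n -> R) : Prop :=
  forall a, exists B, forall x, feasible g x -> Fval f P1 P2 x <= a -> norm x <= B.

Definition MFCQ {n m} (g : 'I_m -> vec n -> R) (gradg : 'I_m -> vec n -> vec n) : Prop :=
  forall x, feasible g x -> exists d : vec n,
    forall i, g i x = 0 -> dot (gradg i x) d < 0.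

Definition Gbar {n m} (g : 'I_m -> vec n -> R) (gradg : 'I_m -> vec n -> vec n)
  (x y : vec n) (w : vec m) (i : 'I_m) : R :=
  g i y + dot (gradg i y) (vsub x y) + w i / 2 * (norm (vsub x y))^2.

Definition subobj {n} (gradf : vec n -> vec n) (P1 : vec n -> R)
  (xt xi : vec n) (Lf : R) (x : vec n) : R :=
  dot (vsub (gradf xt) xi) (vsub x xt) + Lf / 2 * (norm (vsub x xt))^2 + P1 x.

Definition Ssol {n m} (gradf : vec n -> vec n) (P1 : vec n -> R)
  (g : 'I_m -> vec n -> R) (gradg : 'I_m -> vec n -> vec n)
  (xt xi : vec n) (Lf : R) (Lg : vec m) (x : vec n) : Prop :=
  (forall i, Gbar g gradg x xt Lg i <= 0) /\
  forall y, (forall i, Gbar g gradg y xt Lg i <= 0) ->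
    subobj gradf P1 xt xi Lf x <= subobj gradf P1 xt xi Lf y.

Definition lagr {n m} (gradf : vec n -> vec n) (P1 : vec n -> R)
  (g : 'I_m -> vec n -> R) (gradg : 'I_m -> vec n -> vec n)
  (xt xi : vec n) (Lf : R) (Lg : vec m) (lam : vec m) (x : vec n) : R :=
  subobj gradf P1 xt xi Lf x + \big[Rplus/0]_(i < m) (lam i * Gbar g gradg x xt Lg i).

Definition is_multiplier {n m} (gradf : vec n -> vec n) (P1 : vec n -> R)
  (g : 'I_m -> vec n -> R) (gradg : 'I_m -> vec n -> vec n)
  (xt xi : vec n) (Lf : R) (Lg : vec m) (xs : vec n) (lam : vec m) : Prop :=
  (forall i, 0 <= lam i) /\
  (forall x, lagr gradf P1 g gradg xt xi Lf Lg lam xs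
             <= lagr gradf P1 g gradg xt xi Lf Lg lam x) /\
  (forall i, lam i * Gbar g gradg xs xt Lg i = 0).

Definition accepted {n m} (f P1 P2 : vec n -> R) (g : 'I_m -> vec n -> R)
  (c : R) (xt x : vec n) : Prop :=
  feasible g x /\ Fval f P1 P2 x <= Fval f P1 P2 xt - c / 2 * (norm (vsub x xt))^2.

(* trial f P1 P2 gradf g gradg c tau xt xi L0f L0g k Lf Lg :
   (Lf, Lg) is the trial pair used at inner iteration k (k = 0 first trial)
   of outer iteration with current point xt, subgradient xi and initial pair
   (L0f, L0g). *)
Inductive trial {n m} (f P1 P2 : vec n -> R) (gradf : vec n -> vec n)
  (g : 'I_m -> vec n -> R) (gradg : 'I_m -> vec n -> vec n) (c tau : R)
  (xt xi : vec n) (L0f : R) (L0g : vec m) : nat -> R -> vec m -> Prop :=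
| trial0 : trial f P1 P2 gradf g gradg c tau xt xi L0f L0g 0 L0f L0g
| trial_infeas : forall k Lf Lg x,
    trial f P1 P2 gradf g gradg c tau xt xi L0f L0g k Lf Lg ->
    Ssol gradf P1 g gradg xt xi Lf Lg x ->
    ~ feasible g x ->
    trial f P1 P2 gradf g gradg c tau xt xi L0f L0g (S k) Lf (vscale tau Lg)
| trial_nodecr : forall k Lf Lg x,
    trial f P1 P2 gradf g gradg c tau xt xi L0f L0g k Lf Lg ->
    Ssol gradf P1 g gradg xt xi Lf Lg x ->
    feasible g x ->
    ~ (Fval f P1 P2 x <= Fval f P1 P2 xt - c / 2 * (norm (vsub x xt))^2) ->
    trial f P1 P2 gradf g gradg c tau xt xi L0f L0g (S k) (tau * Lf) Lg.

(* reachable ... t xt : xt is a possible iterate x^t of SCP_ls started at x0,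
   for some admissible choices of xi^s in dP2(x^s) and of the initial pairs
   (L_f^{s,0}, L_g^{s,0}) in [Llo, Lhi] x [Llo, Lhi]^m, s < t. *)
Inductive reachable {n m} (f P1 P2 : vec n -> R) (gradf : vec n -> vec n)
  (g : 'I_m -> vec n -> R) (gradg : 'I_m -> vec n -> vec n) (c tau Llo Lhi : R)
  (x0 : vec n) : nat -> vec n -> Prop :=
| reach0 : reachable f P1 P2 gradf g gradg c tau Llo Lhi x0 0 x0
| reachS : forall t xt xi L0f L0g k Lf Lg x',
    reachable f P1 P2 gradf g gradg c tau Llo Lhi x0 t xt ->
    subgrad P2 xt xi ->
    Llo <= L0f <= Lhi ->
    (forall i, Llo <= L0g i <= Lhi) ->
    trial f P1 P2 gradf g gradg c tau xt xi L0f L0g k Lf Lg ->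
    Ssol gradf P1 g gradg xt xi Lf Lg x' ->
    accepted f P1 P2 g c xt x' ->
    reachable f P1 P2 gradf g gradg c tau Llo Lhi x0 (S t) x'.

(* Problem (S) minimizes a strongly convex function under convex quadratic constraints,
   and MFCQ at the feasible point [xt] makes it strictly feasible. Existence and
   uniqueness of its solution follow from strong convexity: a minimizing sequence is
   Cauchy by the parallelogram law. Lagrange multipliers are obtained without any
   separation theorem: quadratic penalties give [eps]-approximate multipliers; the
   minimal-norm [eps]-multipliers have norms increasing as [eps] decreases and bounded
   through the Slater point, hence they converge to an exact multiplier. Stationarity
   and the model inequality of (iv) then come from the first-order condition for the
   minimizer of the Lagrangian together with the descent lemma for [f].
   For the line search, the descent lemma for the [g i] shows that the solution of (S)
   is feasible once [Lg] dominates the moduli [Lgmod], and the decrease test holds once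
   [Lf >= Lfmod + c]; as each failed test multiplies one of them by [tau], an inner loop
   performs a bounded number of enlargements of each, which gives [k0] and the bound on
   the pairs. *)

From HB Require Import structures.
From Stdlib Require Import Reals Lra Psatz FunctionalExtensionality IndefiniteDescription Classical.
From mathcomp Require Import ssreflect ssrfun ssrbool eqtype ssrnat seq fintype bigop.
Open Scope R_scope.
Set Implicit Arguments. Unset Strict Implicit.

Lemma RplusA : associative Rplus.
Proof. by move=> x y z; rewrite Rplus_assoc. Qed.

HB.instance Definition _ := Monoid.isComLaw.Build R 0 Rplus RplusA Rplus_comm Rplus_0_l.
HB.instance Definition _ := Monoid.isMulLaw.Build R 0 Rmult Rmult_0_l Rmult_0_r.
HB.instance Definition _ :=
  Monoid.isAddLaw.Build R Rmult Rplus Rmult_plus_distr_r Rmult_plus_distr_l.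

Notation "\sum_ ( i <- r ) F" := (\big[Rplus/0]_(i <- r) F) : R_scope.
Notation "\sum_ ( i < k ) F" := (\big[Rplus/0]_(i < k) F) : R_scope.

Section RealSums.
Variable I : Type.
Implicit Types (r : seq I) (F G : I -> R).

Lemma sumrD r F G : \sum_(i <- r) (F i + G i) = \sum_(i <- r) F i + \sum_(i <- r) G i.
Proof. exact: big_split. Qed.

Lemma sumrN r F : \sum_(i <- r) - F i = - \sum_(i <- r) F i.
Proof. by rewrite (big_morph Ropp Ropp_plus_distr Ropp_0). Qed.

Lemma sumrB r F G : \sum_(i <- r) (F i - G i) = \sum_(i <- r) F i - \sum_(i <- r) G i.
Proof. by rewrite sumrD sumrN. Qed.

Lemma sumrZ r a F : \sum_(i <- r) (a * F i) = a * \sum_(i <- r) F i.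
Proof. by rewrite big_distrr. Qed.

Lemma ler_sum r F G : (forall i, F i <= G i) -> \sum_(i <- r) F i <= \sum_(i <- r) G i.
Proof. by move=> FG; apply: (big_ind2 Rle) => // *; [lra | apply: Rplus_le_compat]. Qed.

Lemma sumr_ge0 r F : (forall i, 0 <= F i) -> 0 <= \sum_(i <- r) F i.
Proof. by move=> F0; apply: (big_ind (Rle 0)) => // *; [lra | apply: Rplus_le_le_0_compat]. Qed.

Lemma cvg_sumr r (u : nat -> I -> R) (l : I -> R) :
  (forall i, Un_cv (fun k => u k i) (l i)) ->
  Un_cv (fun k => \sum_(i <- r) u k i) (\sum_(i <- r) l i).
Proof.
move=> ul; elim: r => [|a r IH].
  rewrite big_nil => e e0; exists 0%nat => k _; rewrite big_nil /R_dist Rminus_0_r Rabs_R0; lra.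
rewrite big_cons; apply: Un_cv_ext (CV_plus _ _ _ _ (ul a) IH) => k; by rewrite big_cons.
Qed.
End RealSums.

Lemma ler_sum_term m (F : 'I_m -> R) i :
  (forall j, 0 <= F j) -> F i <= \sum_(j < m) F j.
Proof.
move=> F0; rewrite (bigD1 i) //= -{1}(Rplus_0_r (F i)); apply: Rplus_le_compat_l.
by apply: (big_ind (Rle 0)) => [|x y|j _]; [lra | exact: Rplus_le_le_0_compat | exact: F0].
Qed.

Lemma sumr_eq0_nonpos m (F : 'I_m -> R) :
  (forall i, F i <= 0) -> 0 <= \sum_(i < m) F i -> forall i, F i = 0.
Proof.
move=> F0 S0 i; have := ler_sum_term i (F := fun j => - F j) (fun j => ltac:(have := F0 j; lra)).
rewrite sumrN => S1; apply: Rle_antisym; [exact: F0 | exact: Rle_trans S0 (Ropp_le_cancel _ _ S1)].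
Qed.

Lemma exists_pos_lower_bound (I : eqType) (r : seq I) (s : I -> R) :
  (forall i, 0 < s i) -> exists t, 0 < t /\ forall i, i \in r -> t <= s i.
Proof.
move=> s0; elim: r => [|a r [t [t0 ts]]]; first by exists 1; split => //; lra.
exists (Rmin t (s a)); split; first exact: Rmin_pos.
move=> i; rewrite in_cons => /orP [/eqP -> | ir]; first exact: Rmin_r.
exact: Rle_trans (Rmin_l _ _) (ts i ir).
Qed.

Section Euclidean.
Variable n : nat.
Implicit Types (x y z : vec n) (a : R).

Lemma dotC x y : dot x y = dot y x.
Proof. by apply: eq_bigr => i _; rewrite Rmult_comm. Qed.

Lemma dotDl x y z : dot (vadd x y) z = dot x z + dot y z.
Proof. by rewrite /dot -sumrD; apply: eq_bigr => i _; rewrite /vadd Rmult_plus_distr_r. Qed.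

Lemma dotDr x y z : dot z (vadd x y) = dot z x + dot z y.
Proof. by rewrite dotC dotDl !(dotC z). Qed.

Lemma dotBl x y z : dot (vsub x y) z = dot x z - dot y z.
Proof. by rewrite /dot -sumrB; apply: eq_bigr => i _; rewrite /vsub Rmult_minus_distr_r. Qed.

Lemma dotBr x y z : dot z (vsub x y) = dot z x - dot z y.
Proof. by rewrite dotC dotBl !(dotC z). Qed.

Lemma dotZl a x y : dot (vscale a x) y = a * dot x y.
Proof. by rewrite /dot -sumrZ; apply: eq_bigr => i _; rewrite /vscale Rmult_assoc. Qed.

Lemma dotZr a x y : dot y (vscale a x) = a * dot y x.
Proof. by rewrite dotC dotZl dotC. Qed.

Lemma dot0r x : dot x (fun _ => 0) = 0.
Proof. by rewrite /dot big1 // => i _; rewrite Rmult_0_r. Qed.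

Lemma vsubxx x : vsub x x = fun _ => 0.
Proof. by apply: functional_extensionality => i; rewrite /vsub Rminus_diag. Qed.

Lemma dotxx_ge0 x : 0 <= dot x x.
Proof. by apply: sumr_ge0 => i; apply: Rle_0_sqr. Qed.

Lemma norm_ge0 x : 0 <= norm x.
Proof. exact: sqrt_pos. Qed.

Lemma norm_sq x : (norm x)^2 = dot x x.
Proof. by rewrite /norm pow2_sqrt //; apply: dotxx_ge0. Qed.

Lemma norm0 : norm (fun _ : 'I_n => 0) = 0.
Proof. by rewrite /norm dot0r sqrt_0. Qed.

Lemma abs_coord_le_norm x i : Rabs (x i) <= norm x.
Proof.
rewrite -sqrt_Rsqr_abs; apply: sqrt_le_1_alt.
exact: (ler_sum_term i (F := fun j => x j * x j) (fun j => Rle_0_sqr _)).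
Qed.

Lemma norm_le_sum_abs x : norm x <= \sum_(i < n) Rabs (x i).
Proof.
rewrite /norm /dot; elim: (index_enum _) => [|a r IH]; rewrite ?big_nil ?big_cons ?sqrt_0; first lra.
set s := \big[Rplus/0]_(i <- r) (x i * x i) in IH *.
have s0 : 0 <= s by apply: sumr_ge0 => i; apply: Rle_0_sqr.
have ss := sqrt_sqrt s s0; have s1 := sqrt_pos s; have xa0 := Rabs_pos (x a).
have xa : x a * x a = Rabs (x a) * Rabs (x a) by rewrite -Rabs_mult Rabs_pos_eq //; apply: Rle_0_sqr.
apply: (Rle_trans _ (Rabs (x a) + sqrt s)); last exact: Rplus_le_compat_l.
rewrite -(sqrt_square (_ + sqrt s)); last lra.
apply: sqrt_le_1_alt; nra.
Qed.

Lemma cauchy_schwarz x y : Rabs (dot x y) <= norm x * norm y.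
Proof.
have quad t : 0 <= dot x x * (t * t) + 2 * t * dot x y + dot y y.
  have := dotxx_ge0 (vadd (vscale t x) y).
  by rewrite !dotDl !dotDr !dotZl !dotZr (dotC y x); lra.
have sq : (dot x y)^2 <= dot x x * dot y y.
  have := dotxx_ge0 x; have := dotxx_ge0 y => y0 x0.
  case: (Req_dec (dot x x) 0) => [xx0 | xx0].
    case: (Req_dec (dot x y) 0) => [-> | xy0]; first nra.
    have := quad (- (dot y y + 1) / (2 * dot x y)); rewrite xx0.
    have -> : 2 * (- (dot y y + 1) / (2 * dot x y)) * dot x y = - (dot y y + 1) by field.
    move=> h; lra.
  have := quad (- dot x y / dot x x).
  have -> : dot x x * (- dot x y / dot x x * (- dot x y / dot x x))
            + 2 * (- dot x y / dot x x) * dot x y = - (dot x y)^2 / dot x x by field.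
  move=> h; have : 0 <= (dot y y - (dot x y)^2 / dot x x) * dot x x by apply: Rmult_le_pos; lra.
  have -> : (dot y y - dot x y ^ 2 / dot x x) * dot x x = dot y y * dot x x - dot x y ^ 2 by field.
  move=> h'; lra.
have := norm_ge0 x; have := norm_ge0 y; rewrite -!norm_sq in sq => y0 x0.
apply: Rsqr_incr_0_var; last nra.
by rewrite /Rsqr -Rabs_mult Rabs_pos_eq; [nra | apply: Rle_0_sqr].
Qed.

Lemma dot_le_norm x y : dot x y <= norm x * norm y.
Proof. exact: Rle_trans (Rle_abs _) (cauchy_schwarz x y). Qed.

Lemma normZ a x : norm (vscale a x) = Rabs a * norm x.
Proof.
rewrite /norm dotZl dotZr -Rmult_assoc sqrt_mult_alt; last exact: Rle_0_sqr.
by rewrite -(sqrt_Rsqr_abs a).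
Qed.

Lemma norm_vsubC x y : norm (vsub x y) = norm (vsub y x).
Proof.
have -> : vsub x y = vscale (-1) (vsub y x).
  by apply: functional_extensionality => i; rewrite /vsub /vscale; ring.
by rewrite normZ Rabs_Ropp Rabs_R1 Rmult_1_l.
Qed.

Lemma norm_vsub_eq0 x y : norm (vsub x y) = 0 -> x = y.
Proof.
move=> xy0; apply: functional_extensionality => i.
have := abs_coord_le_norm (vsub x y) i; rewrite xy0 /vsub => h.
have := Rabs_pos (x i - y i); have := Rle_abs (x i - y i); have := Rle_abs (- (x i - y i)).
rewrite Rabs_Ropp; lra.
Qed.
End Euclidean.

Definition vcvg n (u : nat -> vec n) (y : vec n) :=
  forall e, 0 < e -> exists N, forall k, (N <= k)%N -> norm (vsub (u k) y) < e.

Definition vcauchy n (u : nat -> vec n) :=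
  forall e, 0 < e -> exists N, forall p q, (N <= p)%N -> (N <= q)%N -> norm (vsub (u p) (u q)) < e.

Lemma inv_succ_lt a : 0 < a -> exists N, forall k, (N <= k)%N -> / (INR k + 1) < a.
Proof.
move=> a0; have [N [Na N0]] := archimed_cor1 a a0; exists N => k /leP Nk.
have := le_INR _ _ Nk; have := lt_0_INR _ N0 => *.
by apply: Rle_lt_trans Na; apply: Rinv_le_contravar; lra.
Qed.

Lemma inv_succ_le_mono N k : (N <= k)%N -> / (INR k + 1) <= / (INR N + 1).
Proof.
move=> /leP Nk; have := le_INR _ _ Nk; have := pos_INR N => *.
by apply: Rinv_le_contravar; lra.
Qed.

Lemma inv_succ_pos k : 0 < / (INR k + 1).
Proof. by apply: Rinv_0_lt_compat; have := pos_INR k; lra. Qed.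

Lemma inv_succ_le1 k : / (INR k + 1) <= 1.
Proof. by have := inv_succ_le_mono (leq0n k); rewrite /= Rplus_0_l Rinv_1. Qed.

Lemma Un_cv_ge u l c : Un_cv u l -> (forall k, c <= u k) -> c <= l.
Proof.
move=> ul uc; apply: Rnot_lt_le => lc; have [N HN] := ul (c - l) ltac:(lra).
have := HN N (le_n N); have := uc N; have := Rle_abs (u N - l); rewrite /R_dist; lra.
Qed.

Lemma Un_cv_le u l c : Un_cv u l -> (forall k, u k <= c) -> l <= c.
Proof.
move=> ul uc; suff : - c <= - l by lra.
by apply: (Un_cv_ge (CV_opp _ _ ul)) => k; have := uc k; rewrite /opp_seq; lra.
Qed.

Lemma vcauchy_cvg n (u : nat -> vec n) : vcauchy u -> exists y, vcvg u y.
Proof.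
move=> uC.
have cC i : Cauchy_crit (fun k => u k i).
  move=> e e0; have [N HN] := uC e e0; exists N => p q /leP Np /leP Nq.
  exact: Rle_lt_trans (abs_coord_le_norm (vsub (u p) (u q)) i) (HN p q Np Nq).
pose y i := proj1_sig (R_complete _ (cC i)).
have uy i : Un_cv (fun k => Rabs (u k i - y i)) 0.
  move=> e e0; have [N HN] := proj2_sig (R_complete _ (cC i)) e e0.
  by exists N => k Nk; rewrite /R_dist Rminus_0_r Rabs_Rabsolu; apply: HN.
have := cvg_sumr (index_enum 'I_n) uy; rewrite big1 // => S0.
exists y => e e0; have [N HN] := S0 e e0; exists N => k /leP Nk.
have := HN k Nk; rewrite /R_dist Rminus_0_r => h.
exact: Rle_lt_trans (norm_le_sum_abs (vsub (u k) y)) (Rle_lt_trans _ _ _ (Rle_abs _) h).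
Qed.

Lemma rcontinuous_cvg n (F : vec n -> R) u y : rcontinuous F -> vcvg u y ->
  Un_cv (fun k => F (u k)) (F y).
Proof.
move=> Fc uy e e0; have [d [d0 Fd]] := Fc y e e0.
by have [N HN] := uy d d0; exists N => k /leP Nk; apply: Fd; apply: HN.
Qed.

Section Continuity.
Variable n : nat.
Implicit Types F G : vec n -> R.

Lemma rcontinuous_const a : rcontinuous (fun _ : vec n => a).
Proof. by move=> x e e0; exists 1; split => [|y _]; rewrite ?Rminus_diag ?Rabs_R0; lra. Qed.

Lemma rcontinuous_coord i : rcontinuous (fun x : vec n => x i).
Proof. by move=> x e e0; exists e; split => // y; apply: Rle_lt_trans (abs_coord_le_norm _ i). Qed.

Lemma rcontinuous_ext F G : (forall x, F x = G x) -> rcontinuous F -> rcontinuous G.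
Proof.
move=> FG Fc x e e0; have [d [d0 Fd]] := Fc x e e0.
by exists d; split => // y; rewrite -!FG; apply: Fd.
Qed.

Lemma rcontinuousD F G : rcontinuous F -> rcontinuous G -> rcontinuous (fun x => F x + G x).
Proof.
move=> Fc Gc x e e0; have [d1 [d10 F1]] := Fc x (e / 2) ltac:(lra).
have [d2 [d20 G2]] := Gc x (e / 2) ltac:(lra).
exists (Rmin d1 d2); split => [|y yx]; first exact: Rmin_pos.
have A := F1 y (Rlt_le_trans _ _ _ yx (Rmin_l _ _)).
have B := G2 y (Rlt_le_trans _ _ _ yx (Rmin_r _ _)).
have -> : F y + G y - (F x + G x) = F y - F x + (G y - G x) by ring.
apply: Rle_lt_trans (Rabs_triang _ _) _; lra.
Qed.

Lemma rcontinuousM F G : rcontinuous F -> rcontinuous G -> rcontinuous (fun x => F x * G x).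
Proof.
move=> Fc Gc x e e0; set a := Rabs (F x); set b := Rabs (G x).
have a0 : 0 <= a := Rabs_pos _; have b0 : 0 <= b := Rabs_pos _.
set eta := Rmin 1 (e / (a + b + 1)).
have eta0 : 0 < eta by apply: Rmin_pos; [lra | apply: Rdiv_lt_0_compat; lra].
have eta1 : eta <= 1 := Rmin_l _ _.
have etae : eta * (a + b + 1) <= e.
  have -> : e = e / (a + b + 1) * (a + b + 1) by field; lra.
  by apply: Rmult_le_compat_r; [lra | apply: Rmin_r].
have [d1 [d10 F1]] := Fc x eta eta0; have [d2 [d20 G2]] := Gc x eta eta0.
exists (Rmin d1 d2); split => [|y yx]; first exact: Rmin_pos.
have A := F1 y (Rlt_le_trans _ _ _ yx (Rmin_l _ _)).
have B := G2 y (Rlt_le_trans _ _ _ yx (Rmin_r _ _)).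
have -> : F y * G y - F x * G x =
  (F y - F x) * (G y - G x) + (F y - F x) * G x + F x * (G y - G x) by ring.
apply: Rle_lt_trans (Rabs_triang _ _) _.
apply: Rle_lt_trans (Rplus_le_compat_r _ _ _ (Rabs_triang _ _)) _.
rewrite !Rabs_mult -/a -/b.
have := Rabs_pos (F y - F x); have := Rabs_pos (G y - G x); nra.
Qed.

Lemma rcontinuous_sum (I : Type) (r : seq I) (F : I -> vec n -> R) :
  (forall i, rcontinuous (F i)) -> rcontinuous (fun x => \sum_(i <- r) F i x).
Proof.
move=> Fc; elim: r => [|a r IH].
  by apply: rcontinuous_ext (rcontinuous_const 0) => x; rewrite big_nil.
by apply: rcontinuous_ext (rcontinuousD (Fc a) IH) => x; rewrite big_cons.
Qed.

Lemma rcontinuous_max0 F : rcontinuous F -> rcontinuous (fun x => Rmax 0 (F x)).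
Proof.
move=> Fc x e e0; have [d [d0 Fd]] := Fc x e e0; exists d; split => // y yx.
apply: Rle_lt_trans (Fd y yx); rewrite /Rmax.
by case: Rle_dec; case: Rle_dec => *; rewrite ?Rminus_diag ?Rabs_R0 /Rabs;
  repeat case: Rcase_abs; lra.
Qed.

Lemma rcontinuous_vsub_coord z i : rcontinuous (fun x : vec n => vsub x z i).
Proof. exact: rcontinuous_ext (rcontinuousD (rcontinuous_coord i) (rcontinuous_const (- z i))). Qed.

Lemma rcontinuous_dot_vsub a z : rcontinuous (fun x : vec n => dot a (vsub x z)).
Proof.
apply: rcontinuous_sum => i.
exact: rcontinuousM (rcontinuous_const _) (rcontinuous_vsub_coord z i).
Qed.

Lemma rcontinuous_norm_vsub_sq z : rcontinuous (fun x : vec n => (norm (vsub x z))^2).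
Proof.
apply: rcontinuous_ext (fun x => esym (norm_sq (vsub x z))) _.
apply: rcontinuous_sum => i.
exact: rcontinuousM (rcontinuous_vsub_coord z i) (rcontinuous_vsub_coord z i).
Qed.
End Continuity.

Definition vcomb n (a : R) (x y : vec n) : vec n := vadd (vscale a x) (vscale (1 - a) y).
Definition midpoint n (x y : vec n) : vec n := vcomb (/ 2) x y.

Definition quad_model n (c : vec n) (w : R) (x0 x : vec n) : R :=
  dot c (vsub x x0) + w / 2 * (norm (vsub x x0))^2.

Ltac dot_expand :=
  repeat first [rewrite dotBl | rewrite dotBr | rewrite dotDl | rewrite dotDr
               | rewrite dotZl | rewrite dotZr].

Section ConvexCombination.
Variable n : nat.
Implicit Types x y z c : vec n.

Lemma norm_vcomb_sq a x y z : (norm (vsub (vcomb a x y) z))^2 =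
  a * (norm (vsub x z))^2 + (1 - a) * (norm (vsub y z))^2 - a * (1 - a) * (norm (vsub x y))^2.
Proof. rewrite !norm_sq /vcomb; dot_expand; rewrite (dotC y x) (dotC z x) (dotC z y); ring. Qed.

Lemma quad_model_vcomb c w x0 a x y : quad_model c w x0 (vcomb a x y) =
  a * quad_model c w x0 x + (1 - a) * quad_model c w x0 y
  - w / 2 * (a * (1 - a)) * (norm (vsub x y))^2.
Proof. rewrite /quad_model norm_vcomb_sq /vcomb; dot_expand; ring. Qed.

Lemma quad_model_sub c w x0 y z : quad_model c w x0 y - quad_model c w x0 z =
  dot (vadd c (vscale w (vsub z x0))) (vsub y z) + w / 2 * (norm (vsub y z))^2.
Proof.
rewrite /quad_model !norm_sq; dot_expand.
rewrite (dotC y x0) (dotC z x0) (dotC y z); field.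
Qed.

Lemma quad_model_self c w x0 : quad_model c w x0 x0 = 0.
Proof. by rewrite /quad_model vsubxx dot0r norm0; ring. Qed.

Lemma rcontinuous_quad_model c w x0 : rcontinuous (quad_model c w x0).
Proof.
apply: rcontinuousD; first exact: rcontinuous_dot_vsub.
exact: rcontinuousM (rcontinuous_const _) (rcontinuous_norm_vsub_sq x0).
Qed.

Lemma vcomb_vsub a x z : vsub (vcomb a x z) z = vscale a (vsub x z).
Proof. by apply: functional_extensionality => i; rewrite /vcomb /vsub /vadd /vscale; ring. Qed.

Lemma dot_vcomb_self a (x y : vec n) : dot (vcomb a x y) (vcomb a x y) =
  a * dot x x + (1 - a) * dot y y - a * (1 - a) * (norm (vsub x y))^2.
Proof.
have zero v : vsub v (fun _ => 0) = v.
  by apply: functional_extensionality => i; rewrite /vsub Rminus_0_r.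
by have := norm_vcomb_sq a x y (fun _ => 0); rewrite !zero !norm_sq.
Qed.

Lemma convex_lower_bound (P : vec n -> R) x0 : convex P -> rcontinuous P ->
  exists K, 0 < K /\ forall x, P x0 - 1 - K * norm (vsub x x0) <= P x.
Proof.
move=> Pc Pr; have [d [d0 Pd]] := Pr x0 1 ltac:(lra).
exists (2 / d); split=> [|x]; first by apply: Rdiv_lt_0_compat; lra.
set r := norm (vsub x x0); have r0 : 0 <= r := norm_ge0 _.
have K0 : 0 <= 2 / d * r by apply: Rmult_le_pos => //; apply: Rlt_le; apply: Rdiv_lt_0_compat; lra.
case: (Rle_lt_dec r (d / 2)) => rd.
  have /Rabs_def2 [_ h] := Pd x ltac:(rewrite -/r; lra); lra.
(* Continuity bounds [P] below on the ball of radius [d]; convexity propagates the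
   bound along the segment from [x0] through the point of that ball towards [x]. *)
set a := d / (2 * r).
have a0 : 0 < a by apply: Rdiv_lt_0_compat; lra.
have a1 : a <= 1.
  by rewrite /a; apply: (Rmult_le_reg_r (2 * r)); [lra | rewrite /Rdiv Rmult_assoc Rinv_l; lra].
have /Rabs_def2 [_ h] : Rabs (P (vcomb a x x0) - P x0) < 1.
  apply: Pd; rewrite vcomb_vsub normZ Rabs_pos_eq -/r; last lra.
  have -> : a * r = d / 2 by rewrite /a; field; lra.
  lra.
have hc : P (vcomb a x x0) <= a * P x + (1 - a) * P x0 := Pc x x0 a ltac:(lra).
have aK : a * (2 / d * r) = 1 by rewrite /a; field; split; lra.
have : a * (- (2 / d * r)) < a * (P x - P x0) by rewrite Ropp_mult_distr_r_reverse aK; lra.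
move=> /(Rmult_lt_reg_l _ _ _ a0) ?; lra.
Qed.
End ConvexCombination.

Lemma ge0_of_lin_quad_ge0 T K : 0 <= K -> (forall a, 0 < a <= 1 -> 0 <= a * T + a * a * K) -> 0 <= T.
Proof.
move=> K0 H; apply: Rnot_lt_le => T0.
set a := Rmin 1 (- T / (2 * (K + 1))).
have a0 : 0 < a by apply: Rmin_pos; [lra | apply: Rdiv_lt_0_compat; lra].
have aT : a * (2 * (K + 1)) <= - T.
  have -> : - T = - T / (2 * (K + 1)) * (2 * (K + 1)) by field; lra.
  by apply: Rmult_le_compat_r; [lra | apply: Rmin_r].
have := H a (conj a0 (Rmin_l _ _)); nra.
Qed.

(** * The descent lemma *)

Definition vline n (x d : vec n) (s : R) : vec n := vadd x (vscale s d).

Lemma derivable_pt_lim_vline n (F : vec n -> R) gF x d s : is_gradient F gF ->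
  derivable_pt_lim (fun s => F (vline x d s)) s (dot (gF (vline x d s)) d).
Proof.
move=> HF e e0; set p := vline x d s; have d0 := norm_ge0 d.
have [del [del0 Hdel]] := HF p (e / 2 / (norm d + 1)) ltac:(apply: Rdiv_lt_0_compat; lra).
have h0 : 0 < del / (norm d + 1) by apply: Rdiv_lt_0_compat; lra.
exists (mkposreal _ h0) => h hn0 /= hdel.
have -> : vline x d (s + h) = vadd p (vscale h d).
  by apply: functional_extensionality => i; rewrite /p /vline /vadd /vscale; ring.
have ah : 0 < Rabs h by apply: Rabs_pos_lt.
have hd : Rabs h * (norm d + 1) < del.
  have -> : del = del / (norm d + 1) * (norm d + 1) by field; lra.
  by apply: Rmult_lt_compat_r; lra.
have := Hdel (vscale h d) ltac:(rewrite normZ; nra); rewrite dotZr normZ.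
set D := dot (gF p) d => HA.
have -> : (F (vadd p (vscale h d)) - F p) / h - D
  = (F (vadd p (vscale h d)) - F p - h * D) / h by field.
rewrite /Rdiv Rabs_mult Rabs_inv; apply: (Rmult_lt_reg_r (Rabs h)) => //.
rewrite Rmult_assoc Rinv_l ?Rmult_1_r; last lra.
apply: Rle_lt_trans HA _.
have E : e / 2 / (norm d + 1) * (norm d + 1) = e / 2 by field; lra.
have : e / 2 / (norm d + 1) * (Rabs h * norm d) <= e / 2 / (norm d + 1) * (Rabs h * (norm d + 1)).
  by apply: Rmult_le_compat_l; [apply: Rlt_le; apply: Rdiv_lt_0_compat; lra | nra].
nra.
Qed.

Lemma derivable_pt_lim_quadratic A B s :
  derivable_pt_lim (fun s => A * s + B * (s * s)) s (A + 2 * B * s).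
Proof.
have := derivable_pt_lim_plus _ _ s _ _
  (derivable_pt_lim_scal _ A s _ (derivable_pt_lim_id s))
  (derivable_pt_lim_scal _ B s _ (derivable_pt_lim_mult _ _ s _ _
     (derivable_pt_lim_id s) (derivable_pt_lim_id s))).
by have -> : A * 1 + B * (1 * s + s * 1) = A + 2 * B * s by ring.
Qed.

Lemma descent_lemma n (F : vec n -> R) gF L x y : is_gradient F gF -> lipschitz gF L ->
  F y <= F x + dot (gF x) (vsub y x) + L / 2 * (norm (vsub y x))^2.
Proof.
move=> HF HL; set d := vsub y x; set A := dot (gF x) d; set Q := (norm d)^2.
pose phi s := F (vline x d s) - (F x + (A * s + L / 2 * Q * (s * s))).
have phi' s : derivable_pt_lim phi s
    (dot (gF (vline x d s)) d - (0 + (A + 2 * (L / 2 * Q) * s))).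
  exact: derivable_pt_lim_minus _ _ s _ _ (derivable_pt_lim_vline x d s HF)
    (derivable_pt_lim_plus _ _ s _ _ (derivable_pt_lim_const (F x) s)
       (derivable_pt_lim_quadratic A (L / 2 * Q) s)).
pose pr s := exist (fun l => derivable_pt_lim phi s l) _ (phi' s).
have [c [Hc c01]] := MVT_cor1 phi 0 1 pr ltac:(lra).
rewrite (derive_pt_eq_0 _ _ _ _ (phi' c)) in Hc.
have E0 : vline x d 0 = x.
  by apply: functional_extensionality => i; rewrite /vline /vadd /vscale; ring.
have E1 : vline x d 1 = y.
  by apply: functional_extensionality => i; rewrite /vline /vadd /vscale /d /vsub; ring.
have Ec : vsub (vline x d c) x = vscale c d.
  by apply: functional_extensionality => i; rewrite /vline /vadd /vscale /vsub; ring.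
have slope : dot (gF (vline x d c)) d - A <= L * c * Q.
  rewrite /A -dotBl; apply: Rle_trans (dot_le_norm _ _) _.
  have := HL (vline x d c) x; rewrite Ec normZ Rabs_pos_eq; last lra.
  have := norm_ge0 d; have := norm_ge0 (vsub (gF (vline x d c)) (gF x)); rewrite /Q /=; nra.
move: Hc; rewrite /phi E0 E1; lra.
Qed.

(** * Minimizers of strongly convex functions *)

Section Minimization.
Variables (n : nat) (S : vec n -> Prop) (phi : vec n -> R) (mu : R).
Hypotheses (mu0 : 0 < mu)
  (S_closed : forall u y, (forall k, S (u k)) -> vcvg u y -> S y)
  (S_midpoint : forall x y, S x -> S y -> S (midpoint x y))
  (phi_cont : rcontinuous phi)
  (phi_midconvex : forall x y, S x -> S y ->
     phi (midpoint x y) <= (phi x + phi y) / 2 - mu / 8 * (norm (vsub x y))^2).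

Lemma exists_minimizing_seq x0 lb : S x0 -> (forall x, S x -> lb <= phi x) ->
  exists v (u : nat -> vec n), (forall x, S x -> v <= phi x) /\
    forall k, S (u k) /\ phi (u k) < v + / (INR k + 1).
Proof.
move=> Sx0 phi_lb.
pose E r := exists x, S x /\ r = - phi x.
have [M [Mub Mlub]] : {M | is_lub E M}.
  apply: completeness; last by exists (- phi x0), x0.
  by exists (- lb) => r [x [Sx ->]]; have := phi_lb x Sx; lra.
have inf x : S x -> - M <= phi x.
  by move=> Sx; have := Mub (- phi x) (ex_intro _ x (conj Sx erefl)); lra.
have near k : exists x, S x /\ phi x < - M + / (INR k + 1).
  apply: NNPP => none; have k0 := inv_succ_pos k.
  suff : M <= M - / (INR k + 1) by lra.
  apply: Mlub => r [x [Sx ->]]; apply: Rnot_lt_le => lt; apply: none; exists x; split => //; lra.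
have [u Hu] := functional_choice _ near.
by exists (- M), u.
Qed.

Lemma minimizing_seq_cauchy v (u : nat -> vec n) : (forall x, S x -> v <= phi x) ->
  (forall k, S (u k) /\ phi (u k) < v + / (INR k + 1)) -> vcauchy u.
Proof.
move=> inf Hu e e0.
have e2 : 0 < mu * (e * e) / 8 by apply: Rdiv_lt_0_compat; [apply: Rmult_lt_0_compat; nra | lra].
have [N HN] := inv_succ_lt e2.
exists N => p q Np Nq; have [Sp up] := Hu p; have [Sq uq] := Hu q.
have ip := inv_succ_le_mono Np; have iq := inv_succ_le_mono Nq.
(* The midpoint cannot go below [v], so strong convexity forces [u p] and [u q] together. *)
have := inf _ (S_midpoint Sp Sq); have := phi_midconvex Sp Sq; have := HN N (leqnn N) => *.
have : mu / 8 * (norm (vsub (u p) (u q)))^2 < mu / 8 * (e * e) by lra.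
move=> /Rmult_lt_reg_l lt; have := norm_ge0 (vsub (u p) (u q)) => *.
have := lt ltac:(lra); rewrite /= => *; nra.
Qed.

Lemma exists_minimizer x0 lb : S x0 -> (forall x, S x -> lb <= phi x) ->
  exists z, S z /\ forall x, S x -> phi z <= phi x.
Proof.
move=> Sx0 phi_lb; have [v [u [inf Hu]]] := exists_minimizing_seq Sx0 phi_lb.
have [z uz] := vcauchy_cvg (minimizing_seq_cauchy inf Hu).
exists z; split; first by apply: (S_closed _ uz) => k; case: (Hu k).
move=> x Sx; apply: Rle_trans (inf x Sx); apply: Rnot_lt_le => lt.
have [N1 HN1] := rcontinuous_cvg phi_cont uz (eps := (phi z - v) / 2) ltac:(lra).
have [N2 HN2] := inv_succ_lt (a := (phi z - v) / 2) ltac:(lra).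
have := HN1 (maxn N1 N2) (elimT leP (leq_maxl N1 N2)); have := HN2 _ (leq_maxr N1 N2).
have := Hu (maxn N1 N2) => - [_]; rewrite /R_dist.
have := Rle_abs (phi z - phi (u (maxn N1 N2))); rewrite Rabs_minus_sym => *; lra.
Qed.
End Minimization.

(** * Lagrange multipliers under a Slater condition *)

Lemma Rmax0_sq_midpoint_le u v w : u <= (v + w) / 2 ->
  Rmax 0 u * Rmax 0 u <= (Rmax 0 v * Rmax 0 v + Rmax 0 w * Rmax 0 w) / 2.
Proof.
move=> uvw; have := Rmax_l 0 u; have := Rmax_l 0 v; have := Rmax_r 0 v.
have := Rmax_l 0 w; have := Rmax_r 0 w => *.
have : Rmax 0 u <= (Rmax 0 v + Rmax 0 w) / 2 by apply: Rmax_lub; lra.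
have := Rle_0_sqr (Rmax 0 v - Rmax 0 w); rewrite /Rsqr => *; nra.
Qed.

Lemma Rmax0_sq_step_le u v a d : 0 <= a -> u <= v + a * d ->
  Rmax 0 u * Rmax 0 u <= Rmax 0 v * Rmax 0 v + 2 * a * (Rmax 0 v * d) + a * a * (d * d).
Proof.
move=> a0 uv; have := Rmax_l 0 u; have := Rmax_l 0 v; have := Rmax_r 0 v => *.
have -> : Rmax 0 v * Rmax 0 v + 2 * a * (Rmax 0 v * d) + a * a * (d * d)
  = (Rmax 0 v + a * d) * (Rmax 0 v + a * d) by ring.
case: (Rle_lt_dec 0 (Rmax 0 v + a * d)) => s0.
  have : Rmax 0 u <= Rmax 0 v + a * d by apply: Rmax_lub; lra.
  move=> *; nra.
have -> : Rmax 0 u = 0 by rewrite /Rmax; case: Rle_dec; lra.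
rewrite Rmult_0_l; exact: Rle_0_sqr.
Qed.

Section LagrangeMultipliers.
Variables (n m : nat) (phi : vec n -> R) (G : 'I_m -> vec n -> R) (mu lb : R) (xs xh : vec n).
Hypotheses (mu0 : 0 < mu)
  (phi_strongly_convex : forall a x y, 0 <= a <= 1 ->
    phi (vcomb a x y) <= a * phi x + (1 - a) * phi y - mu / 2 * (a * (1 - a)) * (norm (vsub x y))^2)
  (G_convex : forall i a x y, 0 <= a <= 1 -> G i (vcomb a x y) <= a * G i x + (1 - a) * G i y)
  (phi_cont : rcontinuous phi) (G_cont : forall i, rcontinuous (G i))
  (phi_lb : forall x, lb <= phi x)
  (xs_feasible : forall i, G i xs <= 0)
  (xs_optimal : forall x, (forall i, G i x <= 0) -> phi xs <= phi x)
  (xh_slater : forall i, G i xh < 0).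

Lemma phi_convex a x y : 0 <= a <= 1 -> phi (vcomb a x y) <= a * phi x + (1 - a) * phi y.
Proof.
move=> a01; have := phi_strongly_convex x y a01; have := norm_ge0 (vsub x y) => *.
have : 0 <= mu / 2 * (a * (1 - a)) * (norm (vsub x y))^2.
  by apply: Rmult_le_pos; [apply: Rmult_le_pos; nra | apply: pow2_ge_0].
lra.
Qed.

Definition penalty x := \sum_(i < m) (Rmax 0 (G i x) * Rmax 0 (G i x)).

Lemma penalty_ge0 x : 0 <= penalty x.
Proof. by apply: sumr_ge0 => i; apply: Rle_0_sqr. Qed.

Lemma penalty_feasible x : (forall i, G i x <= 0) -> penalty x = 0.
Proof.
move=> Gx; rewrite /penalty big1 // => i _; rewrite /Rmax.
case: Rle_dec => [Gi | _]; last ring.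
have -> : G i x = 0 by have := Gx i; lra.
ring.
Qed.

Lemma penalty_midpoint x y : penalty (midpoint x y) <= (penalty x + penalty y) / 2.
Proof.
have -> : (penalty x + penalty y) / 2 = / 2 * penalty x + / 2 * penalty y by field.
rewrite /penalty -!sumrZ -sumrD; apply: ler_sum => i /=.
have := G_convex i x y (a := / 2) ltac:(lra) => Gmid.
have := Rmax0_sq_midpoint_le (u := G i (midpoint x y)) (v := G i x) (w := G i y)
  ltac:(rewrite /midpoint; lra).
lra.
Qed.

Lemma exists_penalized_minimizer rho : 0 < rho ->
  exists xr, forall x, phi xr + rho / 2 * penalty xr <= phi x + rho / 2 * penalty x.
Proof.
move=> rho0; pose psi x := phi x + rho / 2 * penalty x.
have psi_cont : rcontinuous psi.
  apply: rcontinuousD => //; apply: rcontinuousM; first exact: rcontinuous_const.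
  by apply: rcontinuous_sum => i; apply: rcontinuousM; apply: rcontinuous_max0.
have psi_lb x : True -> lb <= psi x.
  by move=> _; rewrite /psi; have := penalty_ge0 x; have := phi_lb x => *; nra.
have psi_midconvex x y : True -> True ->
    psi (midpoint x y) <= (psi x + psi y) / 2 - mu / 8 * (norm (vsub x y))^2.
  move=> _ _; have := phi_strongly_convex x y (a := / 2) ltac:(lra).
  have -> : / 2 * (1 - / 2) = / 4 by field.
  have := penalty_midpoint x y => *.
  have : rho / 2 * penalty (midpoint x y) <= rho / 2 * ((penalty x + penalty y) / 2).
    by apply: Rmult_le_compat_l; lra.
  rewrite /psi /midpoint => *; lra.
have [xr [_ xr_min]] := exists_minimizer mu0 (fun _ _ _ _ => I) (fun _ _ _ _ => I)
  psi_cont psi_midconvex (x0 := xs) I psi_lb.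
by exists xr => x; apply: xr_min.
Qed.

Section PenalizedMinimizer.
Variables (rho : R) (xr : vec n).
Hypotheses (rho0 : 0 < rho)
  (xr_min : forall x, phi xr + rho / 2 * penalty xr <= phi x + rho / 2 * penalty x).

Definition penalty_multiplier : vec m := fun i => rho * Rmax 0 (G i xr).

Lemma penalty_multiplier_ge0 i : 0 <= penalty_multiplier i.
Proof. by apply: Rmult_le_pos; [lra | apply: Rmax_l]. Qed.

Lemma penalty_complementarity_ge0 : 0 <= \sum_(i < m) (penalty_multiplier i * G i xr).
Proof.
apply: sumr_ge0 => i; rewrite /penalty_multiplier /Rmax.
case: Rle_dec => ?; nra.
Qed.

(* First-order optimality of [xr] along the segment towards [x]: the gradient of the
   penalty at [xr] is the multiplier, so [xr] minimizes the Lagrangian. *)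
Lemma penalized_minimizer_lagrangian x :
  phi xr + \sum_(i < m) (penalty_multiplier i * G i xr)
  <= phi x + \sum_(i < m) (penalty_multiplier i * G i x).
Proof.
set D := \sum_(i < m) (Rmax 0 (G i xr) * (G i x - G i xr)).
set K := rho / 2 * \sum_(i < m) ((G i x - G i xr) * (G i x - G i xr)).
have K0 : 0 <= K by apply: Rmult_le_pos; [lra | apply: sumr_ge0 => i; apply: Rle_0_sqr].
have lamD : \sum_(i < m) (penalty_multiplier i * G i x) - \sum_(i < m) (penalty_multiplier i * G i xr)
          = rho * D.
  by rewrite -sumrB /D -sumrZ; apply: eq_bigr => i _; rewrite /penalty_multiplier; ring.
suff : 0 <= phi x - phi xr + rho * D by lra.
apply: (ge0_of_lin_quad_ge0 K0) => a a01.
have step : penalty (vcomb a x xr) <= penalty xr + 2 * a * D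
    + a * a * \sum_(i < m) ((G i x - G i xr) * (G i x - G i xr)).
  rewrite /D /penalty -!sumrZ -!sumrD; apply: ler_sum => i /=.
  by apply: Rmax0_sq_step_le; [lra | have := G_convex i x xr (a := a) ltac:(lra); lra].
have := xr_min (vcomb a x xr); have := phi_convex x xr (a := a) ltac:(lra) => *.
have : rho / 2 * penalty (vcomb a x xr) <= rho / 2 * (penalty xr + 2 * a * D
    + a * a * \sum_(i < m) ((G i x - G i xr) * (G i x - G i xr))) by apply: Rmult_le_compat_l; lra.
rewrite /K => *; nra.
Qed.

Lemma penalized_minimizer_violation i : rho / 2 * (Rmax 0 (G i xr) * Rmax 0 (G i xr)) <= phi xs - lb.
Proof.
have := xr_min xs; rewrite (penalty_feasible xs_feasible) Rmult_0_r Rplus_0_r => xr_xs.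
have := phi_lb xr; have := ler_sum_term i (F := fun j => Rmax 0 (G j xr) * Rmax 0 (G j xr))
  (fun j => Rle_0_sqr _); rewrite -/(penalty xr) => *.
have : rho / 2 * (Rmax 0 (G i xr) * Rmax 0 (G i xr)) <= rho / 2 * penalty xr.
  by apply: Rmult_le_compat_l; lra.
lra.
Qed.
End PenalizedMinimizer.

Lemma relaxed_value_lb y del s : 0 < del -> 0 < s -> (forall i, G i xh <= - s) ->
  (forall i, G i y <= del) -> phi xs - del / s * (phi xh - phi xs) <= phi y.
Proof.
move=> del0 s0 xh_s y_del; set th := del / (del + s).
have th01 : 0 < th < 1.
  rewrite /th; split; first by apply: Rdiv_lt_0_compat; lra.
  by apply: (Rmult_lt_reg_r (del + s)); [lra | rewrite /Rdiv Rmult_assoc Rinv_l; lra].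
have feas i : G i (vcomb th xh y) <= 0.
  apply: Rle_trans (G_convex i xh y (a := th) ltac:(lra)) _.
  have := xh_s i; have := y_del i => *.
  have E : th * s = (1 - th) * del by rewrite /th; field; lra.
  nra.
have := xs_optimal feas; have := phi_convex xh y (a := th) ltac:(lra) => *.
suff : s * phi xs - del * (phi xh - phi xs) <= s * phi y.
  move=> h; apply: (Rmult_le_reg_l s) => //.
  by have -> : s * (phi xs - del / s * (phi xh - phi xs)) = s * phi xs - del * (phi xh - phi xs)
    by field; lra.
have -> : s * phi xs - del * (phi xh - phi xs) = (del + s) * phi xs - del * phi xh by ring.
have -> : s * phi y = (del + s) * ((1 - th) * phi y) by rewrite /th; field; lra.
have -> : del * phi xh = (del + s) * (th * phi xh) by rewrite /th; field; lra.
have : (del + s) * phi xs <= (del + s) * (th * phi xh + (1 - th) * phi y).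
  by apply: Rmult_le_compat_l; lra.
lra.
Qed.

Definition approx_multiplier eps (l : vec m) :=
  (forall i, 0 <= l i) /\ forall x, phi xs - eps <= phi x + \sum_(i < m) (l i * G i x).

(* The penalty method with weight [rho = 2 (phi xs - lb + 1) / del^2] keeps every
   constraint violation below [del], which [relaxed_value_lb] converts into [eps]. *)
Lemma exists_approx_multiplier eps : 0 < eps -> exists l, approx_multiplier eps l.
Proof.
move=> eps0; have [s [s0 xh_s]] := exists_pos_lower_bound (index_enum 'I_m)
  (s := fun i => - G i xh) (fun i => ltac:(have := xh_slater i; lra)).
have xs_xh : phi xs <= phi xh by apply: xs_optimal => i; have := xh_slater i; lra.
have lb_xs := phi_lb xs.
set del := eps * s / (phi xh - phi xs + 1).
have del0 : 0 < del by apply: Rdiv_lt_0_compat; [nra | lra].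
set rho := 2 * (phi xs - lb + 1) / (del * del).
have rho0 : 0 < rho by apply: Rdiv_lt_0_compat; nra.
have [xr xr_min] := exists_penalized_minimizer rho0.
exists (penalty_multiplier rho xr); split; first exact: penalty_multiplier_ge0.
have small i : G i xr <= del.
  apply: Rnot_lt_le => big; have := penalized_minimizer_violation rho0 xr_min i.
  have -> : Rmax 0 (G i xr) = G i xr by rewrite /Rmax; case: Rle_dec; lra.
  have rd : rho / 2 * (del * del) = phi xs - lb + 1 by rewrite /rho; field; lra.
  have : rho / 2 * (del * del) < rho / 2 * (G i xr * G i xr) by apply: Rmult_lt_compat_l; nra.
  lra.
have := relaxed_value_lb del0 s0 (fun i => ltac:(have := xh_s i (mem_index_enum i); lra)) small.
have : del / s * (phi xh - phi xs) <= eps.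
  have -> : del / s * (phi xh - phi xs) = eps * ((phi xh - phi xs) / (phi xh - phi xs + 1)).
    by rewrite /del; field; lra.
  have : (phi xh - phi xs) / (phi xh - phi xs + 1) <= 1.
    by apply: (Rmult_le_reg_r (phi xh - phi xs + 1)); [lra | rewrite /Rdiv Rmult_assoc Rinv_l; lra].
  move=> *; nra.
move=> bound relaxed x; have := penalized_minimizer_lagrangian rho0 xr_min x.
have := penalty_complementarity_ge0 xr rho0 => *; lra.
Qed.

Lemma approx_multiplier_mono e e' l : e <= e' -> approx_multiplier e l -> approx_multiplier e' l.
Proof. by move=> ee' [l0 lx]; split => // x; have := lx x; lra. Qed.

Lemma approx_multiplier_midpoint e l l' :
  approx_multiplier e l -> approx_multiplier e l' -> approx_multiplier e (midpoint l l').
Proof.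
move=> [l0 lx] [l'0 l'x]; split=> [i | x].
  by rewrite /midpoint /vcomb /vadd /vscale; have := l0 i; have := l'0 i; lra.
have -> : \sum_(i < m) (midpoint l l' i * G i x) =
  / 2 * \sum_(i < m) (l i * G i x) + (1 - / 2) * \sum_(i < m) (l' i * G i x).
  by rewrite -!sumrZ -sumrD; apply: eq_bigr => i _; rewrite /midpoint /vcomb /vadd /vscale; ring.
have := lx x; have := l'x x; lra.
Qed.

Lemma approx_multiplier_closed e u l : (forall k, approx_multiplier e (u k)) -> vcvg u l ->
  approx_multiplier e l.
Proof.
move=> ue ul; split=> [i | x].
  by apply: (Un_cv_ge (rcontinuous_cvg (rcontinuous_coord i) ul)) => k; case: (ue k).
have Lc : rcontinuous (fun l : vec m => phi x + \sum_(i < m) (l i * G i x)).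
  apply: rcontinuousD; first exact: rcontinuous_const.
  apply: rcontinuous_sum => i.
  by apply: rcontinuousM; [apply: rcontinuous_coord | apply: rcontinuous_const].
by apply: (Un_cv_ge (rcontinuous_cvg Lc ul)) => k; case: (ue k) => _; apply.
Qed.

(* Testing an approximate multiplier at the Slater point bounds each of its entries. *)
Lemma approx_multiplier_bound e l : e <= 1 -> approx_multiplier e l ->
  dot l l <= \sum_(i < m) ((phi xh - phi xs + 1) / (- G i xh) * ((phi xh - phi xs + 1) / (- G i xh))).
Proof.
move=> e1 [l0 lx]; have := lx xh => lxh.
have lG i : 0 <= l i * - G i xh by have := l0 i; have := xh_slater i => *; nra.
have sum_le : \sum_(i < m) (l i * - G i xh) <= phi xh - phi xs + 1.
  have : \sum_(i < m) (l i * - G i xh) = - \sum_(i < m) (l i * G i xh).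
    by rewrite -sumrN; apply: eq_bigr => i _; ring.
  lra.
apply: ler_sum => i; have := ler_sum_term i lG => term.
have li : l i <= (phi xh - phi xs + 1) / - G i xh.
  apply: (Rmult_le_reg_r (- G i xh)); first by have := xh_slater i; lra.
  by rewrite /Rdiv Rmult_assoc Rinv_l; have := xh_slater i => *; lra.
by have := l0 i => ?; apply: Rmult_le_compat; lra.
Qed.

Definition min_norm_approx_multiplier eps (l : vec m) :=
  approx_multiplier eps l /\ forall l', approx_multiplier eps l' -> dot l l <= dot l' l'.

Lemma exists_min_norm_approx_multiplier eps : 0 < eps ->
  exists l, min_norm_approx_multiplier eps l.
Proof.
move=> eps0; have [l0 l0e] := exists_approx_multiplier eps0.
have norm_midconvex l l' : approx_multiplier eps l -> approx_multiplier eps l' ->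
    dot (midpoint l l') (midpoint l l') <= (dot l l + dot l' l') / 2 - 2 / 8 * (norm (vsub l l'))^2.
  move=> _ _; rewrite /midpoint dot_vcomb_self.
  have -> : / 2 * (1 - / 2) = 2 / 8 by field.
  lra.
have dot_cont : rcontinuous (fun l : vec m => dot l l).
  by apply: rcontinuous_sum => i; apply: rcontinuousM; apply: rcontinuous_coord.
have [l [le lmin]] := exists_minimizer (phi := fun l => dot l l) (mu := 2) ltac:(lra)
  (@approx_multiplier_closed eps) (@approx_multiplier_midpoint eps)
  dot_cont norm_midconvex (x0 := l0) l0e (fun l _ => dotxx_ge0 l).
by exists l.
Qed.

Lemma min_norm_approx_multipliers_cauchy (L : nat -> vec m) :
  (forall k, min_norm_approx_multiplier (/ (INR k + 1)) (L k)) -> vcauchy L.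
Proof.
move=> HL; pose N k := dot (L k) (L k).
have tail k j : (k <= j)%N -> approx_multiplier (/ (INR k + 1)) (L j).
  by move=> kj; apply: approx_multiplier_mono (inv_succ_le_mono kj) (proj1 (HL j)).
have N_mono k j : (k <= j)%N -> N k <= N j by move=> kj; apply: (proj2 (HL k)); apply: tail.
(* [L k] has minimal norm among the admissible points, the midpoint of [L k] and [L j]
   among them, hence the parallelogram law bounds [|L j - L k|^2] by the norm increase. *)
have gap k j : (k <= j)%N -> (norm (vsub (L j) (L k)))^2 <= 2 * (N j - N k).
  move=> kj; have := proj2 (HL k) _ (approx_multiplier_midpoint (tail _ _ kj) (proj1 (HL k))).
  rewrite /midpoint dot_vcomb_self -/(N j) -/(N k).
  have -> : / 2 * (1 - / 2) = / 4 by field.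
  move=> *; lra.
have N_cauchy : Cauchy_crit N.
  apply: CV_Cauchy; apply: growing_cv; first by move=> k; apply: N_mono; apply: leqnSn.
  by exists (\sum_(i < m) ((phi xh - phi xs + 1) / (- G i xh) * ((phi xh - phi xs + 1) / (- G i xh))))
    => r [k ->]; apply: approx_multiplier_bound (inv_succ_le1 k) (proj1 (HL k)).
move=> e e0; have [K HK] := N_cauchy (e * e / 2) ltac:(nra).
exists K => p q Kp Kq; have := HK p q (elimT leP Kp) (elimT leP Kq); rewrite /R_dist => Npq.
have : (norm (vsub (L p) (L q)))^2 < e * e.
  case: (leqP p q) => pq.
    rewrite norm_vsubC; have := gap _ _ pq; have := Rle_abs (N q - N p).
    rewrite Rabs_minus_sym in Npq => *; lra.
  have := gap _ _ (ltnW pq); have := Rle_abs (N p - N q) => *; lra.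
have := norm_ge0 (vsub (L p) (L q)); rewrite /= => *; nra.
Qed.

Lemma exists_lagrange_multiplier : exists lam : vec m, (forall i, 0 <= lam i) /\
  (forall x, phi xs <= phi x + \sum_(i < m) (lam i * G i x)) /\ (forall i, lam i * G i xs = 0).
Proof.
have [L HL] := functional_choice _ (fun k => exists_min_norm_approx_multiplier (inv_succ_pos k)).
have [lam Llam] := vcauchy_cvg (min_norm_approx_multipliers_cauchy HL).
have lam_approx k : approx_multiplier (/ (INR k + 1)) lam.
  apply: (approx_multiplier_closed (u := fun j => L (j + k)%N)).
    by move=> j; apply: approx_multiplier_mono (inv_succ_le_mono (leq_addl j k)) (proj1 (HL _)).
  move=> e e0; have [K HK] := Llam e e0.
  by exists K => j Kj; apply: HK; apply: leq_trans Kj (leq_addr k j).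
have [lam0 _] := lam_approx 0%N.
have lagr x : phi xs <= phi x + \sum_(i < m) (lam i * G i x).
  apply: Rnot_lt_le => lt.
  have [K HK] := inv_succ_lt (a := phi xs - (phi x + \sum_(i < m) (lam i * G i x))) ltac:(lra).
  by have := HK K (leqnn K); case: (lam_approx K) => _ /(_ x) => *; lra.
exists lam; split => //; split => //.
apply: sumr_eq0_nonpos => [i|]; first by have := lam0 i; have := xs_feasible i => *; nra.
by have := lagr xs => *; lra.
Qed.
End LagrangeMultipliers.

(** * The subproblem (S) *)

Lemma dot_sum_scale n m (A : 'I_m -> vec n) (lam : vec m) (u : vec n) :
  dot (fun j => \sum_(i < m) (lam i * A i j)) u = \sum_(i < m) (lam i * dot (A i) u).
Proof.
rewrite /dot; under eq_bigr => j _ do rewrite Rmult_comm -sumrZ.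
rewrite exchange_big; apply: eq_bigr => i _; rewrite -sumrZ.
by apply: eq_bigr => j _; ring.
Qed.

Lemma quadratic_eventually_neg g0 al be : g0 <= 0 -> 0 <= be -> (g0 = 0 -> al < 0) ->
  exists s0, 0 < s0 /\ forall s, 0 < s <= s0 -> g0 + s * al + s * s * be < 0.
Proof.
move=> g00 be0 al0; have abs := Rabs_pos al; have := Rle_abs al => al_abs.
case: (Rlt_le_dec g0 0) => g0_neg.
  exists (Rmin 1 (- g0 / (Rabs al + be + 1))); split.
    by apply: Rmin_pos; [lra | apply: Rdiv_lt_0_compat; lra].
  move=> s [s0 ss0]; have s1 := Rle_trans _ _ _ ss0 (Rmin_l _ _).
  have : s * (Rabs al + be + 1) <= - g0.
    have -> : - g0 = - g0 / (Rabs al + be + 1) * (Rabs al + be + 1) by field; lra.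
    by apply: Rmult_le_compat_r; [lra | apply: Rle_trans ss0 (Rmin_r _ _)].
  have : s * al <= s * Rabs al by apply: Rmult_le_compat_l; lra.
  have : s * s * be <= s * be by apply: Rmult_le_compat_r => //; nra.
  move=> *; nra.
have -> : g0 = 0 by lra.
have al_neg := al0 ltac:(lra).
exists (- al / (be + 1)); split => [|s [s0 ss0]]; first by apply: Rdiv_lt_0_compat; lra.
have : s * (be + 1) <= - al.
  have -> : - al = - al / (be + 1) * (be + 1) by field; lra.
  by apply: Rmult_le_compat_r; lra.
move=> *; nra.
Qed.

(* Along segments from [xs] the quadratic term is of second order, so it disappears
   from the first-order condition. *)
Lemma subgrad_of_prox_min n (P : vec n -> R) (w xs : vec n) (L : R) : convex P -> 0 <= L ->
  (forall x, P xs <= P x + dot w (vsub x xs) + L / 2 * (norm (vsub x xs))^2) ->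
  subgrad P xs (vscale (-1) w).
Proof.
move=> Pc L0 xs_min y; rewrite dotZl.
have K0 : 0 <= L / 2 * (norm (vsub y xs))^2 by apply: Rmult_le_pos; [lra | apply: pow2_ge_0].
suff : 0 <= P y - P xs + dot w (vsub y xs) by lra.
apply: (ge0_of_lin_quad_ge0 K0) => a a01.
have := xs_min (vcomb a y xs); rewrite vcomb_vsub dotZr normZ Rabs_pos_eq; last lra.
have := Pc y xs a ltac:(lra); rewrite -/(vcomb a y xs) => *.
have -> : a * a * (L / 2 * norm (vsub y xs) ^ 2) = L / 2 * (a * norm (vsub y xs)) ^ 2 by ring.
lra.
Qed.

Section SubProblem.
Variables (n m : nat) (gradf : vec n -> vec n) (P1 : vec n -> R)
  (g : 'I_m -> vec n -> R) (gradg : 'I_m -> vec n -> vec n)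
  (xt xi : vec n) (Lf : R) (Lg : vec m).
Hypotheses (P1_convex : convex P1) (P1_cont : rcontinuous P1)
  (xt_feasible : feasible g xt) (mfcq : MFCQ g gradg)
  (Lf0 : 0 < Lf) (Lg0 : forall i, 0 < Lg i).

Local Notation obj := (subobj gradf P1 xt xi Lf).
Local Notation Gb i x := (Gbar g gradg x xt Lg i).

Lemma subobj_quad_model x : obj x = quad_model (vsub (gradf xt) xi) Lf xt x + P1 x.
Proof. by []. Qed.

Lemma Gbar_quad_model i x : Gb i x = g i xt + quad_model (gradg i xt) (Lg i) xt x.
Proof. by rewrite /Gbar /quad_model Rplus_assoc. Qed.

Lemma subobj_strongly_convex a x y : 0 <= a <= 1 ->
  obj (vcomb a x y) <= a * obj x + (1 - a) * obj y - Lf / 2 * (a * (1 - a)) * (norm (vsub x y))^2.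
Proof.
move=> a01; have P1c : P1 (vcomb a x y) <= a * P1 x + (1 - a) * P1 y := P1_convex x y a01.
rewrite !subobj_quad_model quad_model_vcomb; lra.
Qed.

Lemma Gbar_convex i a x y : 0 <= a <= 1 -> Gb i (vcomb a x y) <= a * Gb i x + (1 - a) * Gb i y.
Proof.
move=> a01; rewrite /= !Gbar_quad_model quad_model_vcomb.
have : 0 <= Lg i / 2 * (a * (1 - a)) * (norm (vsub x y))^2.
  by apply: Rmult_le_pos; [apply: Rmult_le_pos; have := Lg0 i; nra | apply: pow2_ge_0].
lra.
Qed.

Lemma rcontinuous_subobj : rcontinuous obj.
Proof. exact: rcontinuousD (rcontinuous_quad_model _ _ _) P1_cont. Qed.

Lemma rcontinuous_Gbar i : rcontinuous (fun x => Gb i x).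
Proof.
apply: rcontinuous_ext (fun x => esym (Gbar_quad_model i x)) _.
exact: rcontinuousD (rcontinuous_const _) (rcontinuous_quad_model _ _ _).
Qed.

Lemma subobj_self : obj xt = P1 xt.
Proof. by rewrite subobj_quad_model quad_model_self Rplus_0_l. Qed.

Lemma Gbar_self i : Gb i xt = g i xt.
Proof. by rewrite Gbar_quad_model quad_model_self Rplus_0_r. Qed.

Lemma subobj_lower_bound : exists lb, forall x, lb <= obj x.
Proof.
have [K [K0 P1_lb]] := convex_lower_bound xt P1_convex P1_cont.
set c := vsub (gradf xt) xi; set B := K + norm c.
have B0 : 0 <= B by have := norm_ge0 c; rewrite /B; lra.
exists (P1 xt - 1 - B * B / (2 * Lf)) => x; rewrite subobj_quad_model /quad_model -/c.
set r := norm (vsub x xt); have r0 : 0 <= r := norm_ge0 _.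
have := P1_lb x; rewrite -/r => P1x.
have : - (norm c * r) <= dot c (vsub x xt).
  have := cauchy_schwarz c (vsub x xt); have := Rle_abs (- dot c (vsub x xt)).
  by rewrite Rabs_Ropp -/r => *; lra.
have : - (B * B / (2 * Lf)) <= Lf / 2 * r ^ 2 - B * r.
  have -> : Lf / 2 * r ^ 2 - B * r
    = (Lf * r - B) * (Lf * r - B) / (2 * Lf) - B * B / (2 * Lf) by field; lra.
  have : 0 <= (Lf * r - B) * (Lf * r - B) / (2 * Lf).
    by apply: Rmult_le_pos; [apply: Rle_0_sqr | apply: Rlt_le; apply: Rinv_0_lt_compat; lra].
  lra.
rewrite /B => *; lra.
Qed.

(* A short step from [xt] along the MFCQ direction is strictly feasible for (S). *)
Lemma exists_subproblem_slater_point : exists xh, forall i, Gb i xh < 0.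
Proof.
have [d Hd] := mfcq xt_feasible.
have Hs i : exists s0, 0 < s0 /\ forall s, 0 < s <= s0 ->
    g i xt + s * dot (gradg i xt) d + s * s * (Lg i / 2 * (norm d)^2) < 0.
  apply: quadratic_eventually_neg; [exact: xt_feasible | | exact: Hd].
  by apply: Rmult_le_pos; [have := Lg0 i; lra | apply: pow2_ge_0].
have [s0 Hs0] := functional_choice _ Hs.
have [t [t0 ts]] := exists_pos_lower_bound (index_enum 'I_m) (fun i => proj1 (Hs0 i)).
exists (vline xt d t) => i; rewrite /Gbar.
have -> : vsub (vline xt d t) xt = vscale t d.
  by apply: functional_extensionality => j; rewrite /vline /vsub /vadd /vscale; ring.
rewrite dotZr normZ Rabs_pos_eq; last lra.
have := proj2 (Hs0 i) t (conj t0 (ts i (mem_index_enum i))).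
by have -> : Lg i / 2 * (t * norm d) ^ 2 = t * t * (Lg i / 2 * norm d ^ 2) by ring.
Qed.

Lemma exists_Ssol : exists xs, Ssol gradf P1 g gradg xt xi Lf Lg xs.
Proof.
have [lb obj_lb] := subobj_lower_bound.
have S_closed u y : (forall k i, Gb i (u k) <= 0) -> vcvg u y -> forall i, Gb i y <= 0.
  by move=> uS uy i; apply: (Un_cv_le (rcontinuous_cvg (rcontinuous_Gbar i) uy)) => k; apply: uS.
have S_midpoint x y : (forall i, Gb i x <= 0) -> (forall i, Gb i y <= 0) ->
    forall i, Gb i (midpoint x y) <= 0.
  move=> Sx Sy i; rewrite /midpoint; have := Gbar_convex i x y (a := / 2) ltac:(lra).
  have := Sx i; have := Sy i => *; lra.
have obj_midconvex x y : (forall i, Gb i x <= 0) -> (forall i, Gb i y <= 0) ->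
    obj (midpoint x y) <= (obj x + obj y) / 2 - Lf / 8 * (norm (vsub x y))^2.
  move=> _ _; have := subobj_strongly_convex x y (a := / 2) ltac:(lra).
  have -> : / 2 * (1 - / 2) = / 4 by field.
  rewrite /midpoint => *; lra.
have [z [Sz z_min]] := exists_minimizer Lf0 S_closed S_midpoint rcontinuous_subobj obj_midconvex
  (x0 := xt) (fun i => ltac:(rewrite Gbar_self; exact: xt_feasible)) (fun x _ => obj_lb x).
by exists z; split.
Qed.

Lemma Ssol_unique x y :
  Ssol gradf P1 g gradg xt xi Lf Lg x -> Ssol gradf P1 g gradg xt xi Lf Lg y -> y = x.
Proof.
move=> [Sx x_min] [Sy y_min].
have Smid i : Gb i (vcomb (/ 2) x y) <= 0.
  by have := Gbar_convex i x y (a := / 2) ltac:(lra); have := Sx i; have := Sy i => /= *; lra.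
have h1 := x_min _ Smid; have h2 := x_min _ Sy; have h3 := y_min _ Sx.
have := subobj_strongly_convex x y (a := / 2) ltac:(lra).
have -> : Lf / 2 * (/ 2 * (1 - / 2)) = Lf / 8 by field.
move=> h4; have d0 := norm_ge0 (vsub x y).
have : Lf / 8 * (norm (vsub x y))^2 <= Lf / 8 * 0 by lra.
have Lf8 : 0 < Lf / 8 by lra.
move=> /(Rmult_le_reg_l _ _ _ Lf8) d2; symmetry; apply: norm_vsub_eq0.
by rewrite /= in d2; nra.
Qed.

Definition multiplier_gradient (lam : vec m) : vec n :=
  fun j => \sum_(i < m) (lam i * gradg i xt j).

Lemma exists_subproblem_multiplier xs : Ssol gradf P1 g gradg xt xi Lf Lg xs ->
  exists lam, is_multiplier gradf P1 g gradg xt xi Lf Lg xs lam.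
Proof.
move=> [xs_feas xs_min]; have [lb obj_lb] := subobj_lower_bound.
have [xh xh_slater] := exists_subproblem_slater_point.
have [lam [lam0 [lam_lagr compl]]] := exists_lagrange_multiplier Lf0 subobj_strongly_convex
  Gbar_convex rcontinuous_subobj rcontinuous_Gbar obj_lb xs_feas xs_min xh_slater.
have lagr_xs : lagr gradf P1 g gradg xt xi Lf Lg lam xs = obj xs.
  by rewrite /lagr big1 ?Rplus_0_r // => i _; apply: compl.
by exists lam; split => //; split => // x; rewrite lagr_xs; apply: lam_lagr.
Qed.

Lemma lagr_quad_model lam x : lagr gradf P1 g gradg xt xi Lf Lg lam x =
  P1 x + \sum_(i < m) (lam i * g i xt)
  + quad_model (vadd (vsub (gradf xt) xi) (multiplier_gradient lam)) (Lf + dot lam Lg) xt x.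
Proof.
rewrite /lagr subobj_quad_model /quad_model dotDl (dot_sum_scale (fun i => gradg i xt)).
have -> : \sum_(i < m) (lam i * Gbar g gradg x xt Lg i) = \sum_(i < m) (lam i * g i xt)
    + \sum_(i < m) (lam i * dot (gradg i xt) (vsub x xt)) + dot lam Lg / 2 * (norm (vsub x xt))^2.
  have -> : dot lam Lg / 2 * (norm (vsub x xt))^2
      = \sum_(i < m) (lam i * (Lg i / 2 * (norm (vsub x xt))^2)).
    by rewrite /dot /Rdiv Rmult_assoc Rmult_comm -sumrZ; apply: eq_bigr => i _; ring.
  by rewrite -!sumrD; apply: eq_bigr => i _; rewrite /Gbar; ring.
field.
Qed.

Section Multiplier.
Variables (xs : vec n) (lam : vec m).
Hypothesis lam_mult : is_multiplier gradf P1 g gradg xt xi Lf Lg xs lam.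

Local Notation Lfg := (Lf + dot lam Lg).
Local Notation W := (vadd (vadd (vsub (gradf xt) xi) (multiplier_gradient lam))
                          (vscale Lfg (vsub xs xt))).

Lemma Lfg_ge0 : 0 <= Lfg.
Proof.
have [lam0 _] := lam_mult.
have : 0 <= dot lam Lg by apply: sumr_ge0 => i; apply: Rmult_le_pos; [apply: lam0 | apply: Rlt_le].
move=> *; lra.
Qed.

Lemma lagr_sub_xs x : lagr gradf P1 g gradg xt xi Lf Lg lam x - lagr gradf P1 g gradg xt xi Lf Lg lam xs
  = P1 x - P1 xs + dot W (vsub x xs) + Lfg / 2 * (norm (vsub x xs))^2.
Proof.
rewrite !lagr_quad_model.
have := quad_model_sub (vadd (vsub (gradf xt) xi) (multiplier_gradient lam)) Lfg xt x xs; lra.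
Qed.

Lemma multiplier_stationarity : subgrad P1 xs (vscale (-1) W).
Proof.
apply: subgrad_of_prox_min P1_convex Lfg_ge0 _ => x.
have [_ [lagr_min _]] := lam_mult; have := lagr_min x; have := lagr_sub_xs x; lra.
Qed.

Lemma multiplier_lagr_gap x :
  subobj gradf P1 xt xi Lf xs + Lfg / 2 * (norm (vsub x xs))^2
  <= lagr gradf P1 g gradg xt xi Lf Lg lam x.
Proof.
have [_ [_ compl]] := lam_mult.
have -> : subobj gradf P1 xt xi Lf xs = lagr gradf P1 g gradg xt xi Lf Lg lam xs.
  by rewrite /lagr big1 ?Rplus_0_r // => i _; apply: compl.
have := multiplier_stationarity x; rewrite dotZl; have := lagr_sub_xs x; lra.
Qed.
End Multiplier.
End SubProblem.

(** * The line search *)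

Lemma Fval_le_subobj n (f P1 P2 : vec n -> R) gradf Lfmod xt xi Lf x :
  is_gradient f gradf -> lipschitz gradf Lfmod -> subgrad P2 xt xi ->
  Fval f P1 P2 x <= f xt - P2 xt + subobj gradf P1 xt xi Lf x + (Lfmod - Lf) / 2 * (norm (vsub x xt))^2.
Proof.
move=> Hf Lip xi_sub; have := descent_lemma xt x Hf Lip; have := xi_sub x.
by rewrite /Fval /subobj dotBl => *; lra.
Qed.

Lemma feasible_of_Gbar n m (g : 'I_m -> vec n -> R) gradg Lgmod xt (Lg : vec m) x :
  (forall i, is_gradient (g i) (gradg i) /\ lipschitz (gradg i) (Lgmod i)) ->
  (forall i, Lgmod i <= Lg i) -> (forall i, Gbar g gradg x xt Lg i <= 0) -> feasible g x.
Proof.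
move=> Hg Lg_ge x_S i; have [gi Lipi] := Hg i.
have := descent_lemma xt x gi Lipi; have := x_S i; have := Lg_ge i.
have := pow2_ge_0 (norm (vsub x xt)); rewrite /Gbar => *; nra.
Qed.

(* [Gbar g gradg x xt Lg i <= 0] is the ball around [xt - gradg i xt / Lg i] whose
   squared radius is the quantity below. *)
Lemma constraint_ball_radius_pos n m (g : 'I_m -> vec n -> R) gradg (Lg : vec m) xt :
  feasible g xt -> MFCQ g gradg -> (forall i, 0 < Lg i) ->
  forall i, 0 < (norm (vscale (/ Lg i) (gradg i xt)))^2 - 2 / Lg i * g i xt.
Proof.
move=> xt_feas mfcq Lg0 i; have Li := Lg0 i; have inv0 : 0 < / Lg i := Rinv_0_lt_compat _ Li.
rewrite normZ Rabs_pos_eq; last lra.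
have gi := xt_feas i; have n0 := norm_ge0 (gradg i xt).
case: (Rlt_le_dec (g i xt) 0) => gi_neg.
  have : 0 < 2 / Lg i * - g i xt by apply: Rmult_lt_0_compat; [apply: Rdiv_lt_0_compat |]; lra.
  have := pow2_ge_0 (/ Lg i * norm (gradg i xt)) => *; lra.
(* An active constraint has a nonzero gradient, by MFCQ. *)
have [d Hd] := mfcq xt xt_feas; have gd := Hd i ltac:(lra).
have : 0 < norm (gradg i xt).
  case: (Rle_lt_or_eq_dec _ _ n0) => // n00.
  have := cauchy_schwarz (gradg i xt) d; rewrite -n00 Rmult_0_l.
  have := Rle_abs (- dot (gradg i xt) d); rewrite Rabs_Ropp => *; lra.
have -> : g i xt = 0 by lra.
move=> *; have : 0 < / Lg i * norm (gradg i xt) by apply: Rmult_lt_0_compat.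
move=> *; nra.
Qed.

Lemma exists_pow_ge tau b l : 1 < tau -> 0 < l -> exists K : nat, b <= tau ^ K * l.
Proof.
move=> tau1 l0; have [N HN] := Pow_x_infinity tau ltac:(rewrite Rabs_pos_eq; lra) (b / l).
exists N; have := HN N (le_n N); rewrite Rabs_pos_eq; last by apply: pow_le; lra.
move=> *; have -> : b = b / l * l by field; lra.
by apply: Rmult_le_compat_r; lra.
Qed.

Lemma reachable_feasible n m (f P1 P2 : vec n -> R) gradf (g : 'I_m -> vec n -> R) gradg
  c tau Llo Lhi x0 t xt :
  feasible g x0 -> reachable f P1 P2 gradf g gradg c tau Llo Lhi x0 t xt -> feasible g xt.
Proof. by move=> x0_feas; case => // ? ? ? ? ? ? ? ? ? _ _ _ _ _ _ []. Qed.

Section LineSearch.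
Variables (n m : nat) (f P1 P2 : vec n -> R) (gradf : vec n -> vec n)
  (g : 'I_m -> vec n -> R) (gradg : 'I_m -> vec n -> vec n) (Lfmod : R) (Lgmod : 'I_m -> R)
  (c tau Llo Lhi : R) (Ka Kb : nat) (xt xi : vec n) (L0f : R) (L0g : vec m).
Hypotheses (P1_convex : convex P1) (P1_cont : rcontinuous P1)
  (Hf : is_gradient f gradf) (Lip_f : lipschitz gradf Lfmod)
  (Hg : forall i, is_gradient (g i) (gradg i) /\ lipschitz (gradg i) (Lgmod i))
  (tau1 : 1 < tau) (Llo0 : 0 < Llo)
  (Ka_large : forall i, Lgmod i <= tau ^ Ka * Llo) (Kb_large : Lfmod + c <= tau ^ Kb * Llo)
  (xt_feasible : feasible g xt) (xi_sub : subgrad P2 xt xi)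
  (L0f_range : Llo <= L0f <= Lhi) (L0g_range : forall i, Llo <= L0g i <= Lhi).

Local Notation trial := (trial f P1 P2 gradf g gradg c tau xt xi L0f L0g).

Lemma tau_pow_mono K k : (K <= k)%N -> tau ^ K * Llo <= tau ^ k * Llo.
Proof. by move=> /leP Kk; apply: Rmult_le_compat_r; [lra | apply: Rle_pow; [lra | exact: Kk]]. Qed.

Lemma sufficient_decrease Lf Lg x : Lfmod + c <= Lf ->
  Ssol gradf P1 g gradg xt xi Lf Lg x ->
  Fval f P1 P2 x <= Fval f P1 P2 xt - c / 2 * (norm (vsub x xt))^2.
Proof.
move=> Lf_ge [_ x_min].
have := Fval_le_subobj P1 Lf x Hf Lip_f xi_sub.
have := x_min xt (fun i => ltac:(rewrite Gbar_self; exact: xt_feasible)); rewrite subobj_self.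
have := pow2_ge_0 (norm (vsub x xt)); rewrite /Fval => *; nra.
Qed.

(* [a] counts the enlargements of [Lg], [b] those of [Lf]; neither can exceed the point
   from which the corresponding test is guaranteed to pass. *)
Lemma trial_shape k Lf Lg : trial k Lf Lg -> exists a b, k = (a + b)%N /\
  (a <= Ka)%N /\ (b <= Kb)%N /\ Lf = tau ^ b * L0f /\ forall i, Lg i = tau ^ a * L0g i.
Proof.
elim => {k Lf Lg} [|k Lf Lg x _ [a [b [-> [aK [bK [-> Lg_eq]]]]]] x_S x_infeas
                  |k Lf Lg x _ [a [b [-> [aK [bK [-> Lg_eq]]]]]] x_S x_feas no_decrease].
- by exists 0%N, 0%N; do 3 split => //; split => [|i]; rewrite /=; ring.
- have aK' : (a < Ka)%N.
    rewrite ltnNge; apply/negP => Ka_a; apply: x_infeas.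
    apply: feasible_of_Gbar Hg _ (proj1 x_S) => i; rewrite Lg_eq.
    apply: Rle_trans (Ka_large i) (Rle_trans _ _ _ (tau_pow_mono Ka_a) _).
    by apply: Rmult_le_compat_l; [apply: pow_le; lra | case: (L0g_range i)].
  exists a.+1, b; do 3 split => //; split => // i.
  by rewrite /vscale Lg_eq /=; ring.
- have bK' : (b < Kb)%N.
    rewrite ltnNge; apply/negP => Kb_b; apply: no_decrease; apply: sufficient_decrease x_S.
    apply: Rle_trans Kb_large (Rle_trans _ _ _ (tau_pow_mono Kb_b) _).
    by apply: Rmult_le_compat_l; [apply: pow_le; lra | case: L0f_range].
  by exists a, b.+1; rewrite addnS; do 3 split => //; split => //=; ring.
Qed.

Lemma trial_bounds k Lf Lg : trial k Lf Lg ->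
  (k < (Ka + Kb).+1)%N /\ 0 < Lf /\ (forall i, 0 < Lg i) /\
  Rabs Lf <= tau ^ Kb * Lhi + tau ^ Ka * Lhi /\
  (forall i, Rabs (Lg i) <= tau ^ Kb * Lhi + tau ^ Ka * Lhi).
Proof.
move=> /trial_shape [a [b [-> [aK [bK [-> Lg_eq]]]]]].
have ta := pow_lt tau a ltac:(lra); have tb := pow_lt tau b ltac:(lra).
have ta' : tau ^ a <= tau ^ Ka by apply: Rle_pow; [lra | apply/leP].
have tb' : tau ^ b <= tau ^ Kb by apply: Rle_pow; [lra | apply/leP].
have pa := pow_lt tau Ka ltac:(lra); have pb := pow_lt tau Kb ltac:(lra).
have Lgi i : 0 < tau ^ a * L0g i /\ tau ^ a * L0g i <= tau ^ Ka * Lhi.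
  by case: (L0g_range i) => *; split; [apply: Rmult_lt_0_compat | apply: Rmult_le_compat]; lra.
have Lf' : 0 < tau ^ b * L0f /\ tau ^ b * L0f <= tau ^ Kb * Lhi.
  by case: L0f_range => *; split; [apply: Rmult_lt_0_compat | apply: Rmult_le_compat]; lra.
split; first by rewrite ltnS; apply: leq_add.
split; first by case: Lf'.
split; first by move=> i; rewrite Lg_eq; case: (Lgi i).
have Lhi0 : 0 < Lhi by case: L0f_range; lra.
have := Rmult_lt_0_compat _ _ pa Lhi0; have := Rmult_lt_0_compat _ _ pb Lhi0 => ? ?.
split; first by case: Lf' => *; rewrite Rabs_pos_eq; lra.
by move=> i; rewrite Lg_eq; case: (Lgi i) => *; rewrite Rabs_pos_eq; lra.
Qed.

Lemma trial_terminates : exists k Lf Lg x, (k < (Ka + Kb).+1)%N /\ trial k Lf Lg /\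
  Ssol gradf P1 g gradg xt xi Lf Lg x /\ accepted f P1 P2 g c xt x.
Proof.
suff steps j : forall k Lf Lg, trial k Lf Lg -> ((Ka + Kb).+1 - k <= j)%N ->
    exists k' Lf' Lg' x, (k' < (Ka + Kb).+1)%N /\ trial k' Lf' Lg' /\
      Ssol gradf P1 g gradg xt xi Lf' Lg' x /\ accepted f P1 P2 g c xt x.
  by apply: (steps _ 0%N L0f L0g (trial0 _ _ _ _ _ _ _ _ _ _ _ _)); rewrite subn0.
elim: j => [|j IH] k Lf Lg Hk j_ge; have [k_lt [Lf0 [Lg0 _]]] := trial_bounds Hk.
  by move: j_ge; rewrite leqn0 subn_eq0 leqNgt k_lt.
have [x x_S] := exists_Ssol gradf gradg xi P1_convex P1_cont xt_feasible Lf0 Lg0.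
case: (classic (accepted f P1 P2 g c xt x)) => acc; first by exists k, Lf, Lg, x.
have next : ((Ka + Kb).+1 - k.+1 <= j)%N by rewrite subnS -ltnS prednK // subn_gt0.
case: (classic (feasible g x)) => x_feas.
  exact: IH _ _ _ (trial_nodecr Hk x_S x_feas (fun d => acc (conj x_feas d))) next.
exact: IH _ _ _ (trial_infeas Hk x_S x_feas) next.
Qed.
End LineSearch.

Lemma subproblem_kkt n m (f P1 P2 : vec n -> R) (gradf : vec n -> vec n)
  (g : 'I_m -> vec n -> R) (gradg : 'I_m -> vec n -> vec n) (Lfmod : R)
  (xt xi : vec n) (Lf : R) (Lg : vec m) :
  is_gradient f gradf -> lipschitz gradf Lfmod -> convex P1 -> rcontinuous P1 ->
  MFCQ g gradg -> feasible g xt -> subgrad P2 xt xi -> 0 < Lf -> (forall i, 0 < Lg i) ->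
  exists xs, Ssol gradf P1 g gradg xt xi Lf Lg xs /\
    (forall y, Ssol gradf P1 g gradg xt xi Lf Lg y -> y = xs) /\
    exists lam : vec m,
      is_multiplier gradf P1 g gradg xt xi Lf Lg xs lam /\
      let Lfg := Lf + dot lam Lg in
      (forall i, lam i * (g i xt + dot (gradg i xt) (vsub xs xt)
                          + Lg i / 2 * (norm (vsub xs xt))^2) = 0) /\
      (exists v, subgrad P1 xs v /\
         forall j, gradf xt j - xi j + Lfg * (xs j - xt j) + v j
                   + \sum_(i < m) (lam i * gradg i xt j) = 0) /\
      (feasible g xs -> forall x : vec n,
         Fval f P1 P2 xs <=
           f xt + dot (vsub (gradf xt) xi) (vsub x xt)
           + Lfg / 2 * (norm (vsub x xt))^2 + P1 x - P2 xt
           + \sum_(i < m) (lam i * (g i xt + dot (gradg i xt) (vsub x xt)))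
           - Lfg / 2 * (norm (vsub x xs))^2
           - (Lf - Lfmod) / 2 * (norm (vsub xs xt))^2).
Proof.
move=> Hf Lip_f P1_convex P1_cont mfcq xt_feas xi_sub Lf0 Lg0.
have [xs xs_S] := exists_Ssol gradf gradg xi P1_convex P1_cont xt_feas Lf0 Lg0.
exists xs; split => //; split => [y y_S|]; first by apply: (Ssol_unique P1_convex Lf0 Lg0 xs_S y_S).
have [lam lam_mult] := exists_subproblem_multiplier P1_convex P1_cont xt_feas mfcq Lf0 Lg0 xs_S.
exists lam; split => //=; split; first by case: lam_mult => _ [_ compl] i; apply: compl.
split.
  exists (vscale (-1) (vadd (vadd (vsub (gradf xt) xi) (multiplier_gradient gradg xt lam))
                          (vscale (Lf + dot lam Lg) (vsub xs xt)))).
  split; first by apply: (multiplier_stationarity P1_convex Lf0 Lg0 lam_mult).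
  move=> j; rewrite /vscale /vadd /vsub /multiplier_gradient.
  set D := dot lam Lg; set S := \sum_(i < m) _; ring.
move=> _ x.
have Fval_xs := Fval_le_subobj P1 Lf xs Hf Lip_f xi_sub.
have := multiplier_lagr_gap P1_convex Lf0 Lg0 lam_mult x.
rewrite lagr_quad_model /quad_model dotDl /multiplier_gradient (dot_sum_scale (fun i => gradg i xt)).
move=> gap.
have -> : \sum_(i < m) (lam i * (g i xt + dot (gradg i xt) (vsub x xt)))
  = \sum_(i < m) (lam i * g i xt) + \sum_(i < m) (lam i * dot (gradg i xt) (vsub x xt)).
  by rewrite -sumrD; apply: eq_bigr => i _; rewrite Rmult_plus_distr_l.
have : (Lfmod - Lf) / 2 * (norm (vsub xs xt))^2 = - ((Lf - Lfmod) / 2 * (norm (vsub xs xt))^2).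
  by field.
lra.
Qed.

Unset Implicit Arguments.
Set Strict Implicit.

Theorem mainTheorem1
  (n m : nat)
  (f : vec n -> R) (gradf : vec n -> vec n)
  (P1 P2 : vec n -> R)
  (g : 'I_m -> vec n -> R) (gradg : 'I_m -> vec n -> vec n)
  (Lfmod : R) (Lgmod : 'I_m -> R)
  (* standing assumptions on (P) *)
  (Hf : is_gradient f gradf) (Hgradf_cont : vcontinuous gradf)
  (HP1c : convex P1) (HP1r : rcontinuous P1)
  (HP2c : convex P2) (HP2r : rcontinuous P2)
  (Hgcont : forall i, rcontinuous (g i))
  (Hfeas : exists x, feasible g x)
  (* Assumption A *)
  (HA1 : lipschitz gradf Lfmod)
  (HA2 : forall i, is_gradient (g i) (gradg i) /\ lipschitz (gradg i) (Lgmod i))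
  (HA3 : level_bounded f P1 P2 g)
  (* Assumption B *)
  (HB1 : forall i, vcontinuous (gradg i))
  (HB2 : MFCQ g gradg)
  (* parameters of SCP_ls *)
  (c Llo Lhi tau : R) (x0 : vec n)
  (Hc : 0 < c) (HL : 0 < Llo < Lhi) (Htau : 1 < tau) (Hx0 : feasible g x0) :
  exists (k0 : nat) (M : R), (1 <= k0)%nat /\
  forall t xt, reachable f P1 P2 gradf g gradg c tau Llo Lhi x0 t xt ->
  forall xi L0f L0g, subgrad P2 xt xi -> Llo <= L0f <= Lhi ->
    (forall i, Llo <= L0g i <= Lhi) ->
    (* (i) termination of the inner loop within k0 inner iterations *)
    (exists k Lf Lg x', (k < k0)%nat /\
       trial f P1 P2 gradf g gradg c tau xt xi L0f L0g k Lf Lg /\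
       Ssol gradf P1 g gradg xt xi Lf Lg x' /\ accepted f P1 P2 g c xt x') /\
    forall k Lf Lg, trial f P1 P2 gradf g gradg c tau xt xi L0f L0g k Lf Lg ->
      (* (i) at most k0 inner iterations *)
      (k < k0)%nat /\
      (* (ii) boundedness of the (trial, hence accepted) pairs *)
      Rabs Lf <= M /\ (forall i, Rabs (Lg i) <= M) /\
      (* (iii) *)
      (forall i, 0 < (norm (vscale (/ Lg i) (gradg i xt)))^2 - 2 / Lg i * g i xt) /\
      (* (i) unique solvability of (S) and (iv) *)
      exists xs, Ssol gradf P1 g gradg xt xi Lf Lg xs /\
        (forall y, Ssol gradf P1 g gradg xt xi Lf Lg y -> y = xs) /\
        exists lam : vec m,
          is_multiplier gradf P1 g gradg xt xi Lf Lg xs lam /\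
          let Lfg := Lf + dot lam Lg in
          (forall i, lam i * (g i xt + dot (gradg i xt) (vsub xs xt)
                              + Lg i / 2 * (norm (vsub xs xt))^2) = 0) /\
          (exists v, subgrad P1 xs v /\
             forall j, gradf xt j - xi j + Lfg * (xs j - xt j) + v j
                       + \big[Rplus/0]_(i < m) (lam i * gradg i xt j) = 0) /\
          (feasible g xs -> forall x : vec n,
             Fval f P1 P2 xs <=
               f xt + dot (vsub (gradf xt) xi) (vsub x xt)
               + Lfg / 2 * (norm (vsub x xt))^2 + P1 x - P2 xt
               + \big[Rplus/0]_(i < m) (lam i * (g i xt + dot (gradg i xt) (vsub x xt)))
               - Lfg / 2 * (norm (vsub x xs))^2
               - (Lf - Lfmod) / 2 * (norm (vsub xs xt))^2).
Proof.
have Llo0 : 0 < Llo by lra.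
have [Ka Ka_large] := exists_pow_ge (\sum_(i < m) Rabs (Lgmod i)) Htau Llo0.
have [Kb Kb_large] := exists_pow_ge (Lfmod + c) Htau Llo0.
have Lg_large i : Lgmod i <= tau ^ Ka * Llo.
  apply: Rle_trans (Rle_abs _) (Rle_trans _ _ _ _ Ka_large).
  exact: (ler_sum_term i (F := fun j => Rabs (Lgmod j)) (fun j => Rabs_pos _)).
exists (Ka + Kb).+1, (tau ^ Kb * Lhi + tau ^ Ka * Lhi); split => //.
move=> t xt xt_reach xi L0f L0g xi_sub L0f_range L0g_range.
have xt_feas := reachable_feasible Hx0 xt_reach.
split; first exact: trial_terminates HP1c HP1r Hf HA1 HA2 Htau Llo0 Lg_large Kb_large
  xt_feas xi_sub L0f_range L0g_range.
move=> k Lf Lg Hk.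
have [k_lt [Lf0 [Lg0 [Lf_bd Lg_bd]]]] := trial_bounds Hf HA1 HA2 Htau Llo0 Lg_large Kb_large
  xt_feas xi_sub L0f_range L0g_range Hk.
do 3 split => //; split; first exact: constraint_ball_radius_pos xt_feas HB2 Lg0.
exact: subproblem_kkt Hf HA1 HP1c HP1r HB2 xt_feas xi_sub Lf0 Lg0.
Qed.
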